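(* Let $\mathbb{M}=(a,b,[a],[b],[b^{-1}])$ be a Markov system satisfying properties ( * ) and ( ** ), where ( * ) holds with respect to the enumeration with first gap $I_1$. Let $\phi_{\mathbb{M}}:G\to\mathrm{Homeo}_+(S^1)$ be the homomorphism with $\phi_{\mathbb{M}}(\alpha)=a$, $\phi_{\mathbb{M}}(\beta)=b$. Then $\phi_{\mathbb{M}}$ is a dynamical realization of some circular order of $G$, based at some point $x_0\in I_1$.
   Context: $G=\langle\alpha,\beta\mid\alpha^2=\beta^3=e\rangle$. A circular order on $G$ is $c:G^3\to\{0,\pm1\}$ with $c(g_1,g_2,g_3)=0$ iff two $g_i$ coincide, $c(g_2,g_3,g_4)-c(g_1,g_3,g_4)+c(g_1,g_2,g_4)-c(g_1,g_2,g_3)=0$, and $c(g_4g_1,g_4g_2,g_4g_3)=c(g_1,g_2,g_3)$. An action $\rho$ is tight at $x_0$ if the stabilizer of $x_0$ is trivial and both endpoints of each gap of $\overline{\rho(G)x_0}$ lie in $\rho(G)x_0$; a dynamical realization of $c$ based at $x_0$ is an action tight at $x_0$ such that $c(g_1,g_2,g_3)=\pm1$ according as $\rho(g_i)x_0$ are distinct and anticlockwise/clockwise. A Markov system is a tuple $(a,b,[a],[b],[b^{-1}])$ with $a$ an orientation-preserving involution of $S^1$, $b$ an orientation-preserving homeomorphism of $S^1$ of period three, and $[a],[b],[b^{-1}]\subset S^1$ with: (A) pairwise disjoint, each a union of $k$ disjoint closed intervals; $X=[a]\cup[b]\cup[b^{-1}]$; (B) no two $a$-intervals (resp. $b$-,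 $b^{-1}$-intervals) are consecutive among components of $X$; principal gaps: gaps of $X$ between an $a$-interval and a $b^{\pm1}$-interval; complementary gaps: between a $b$- and a $b^{-1}$-interval; $[[b]]$: union of maximal intervals made of $b^{\pm1}$-intervals and complementary gaps; (C) $a([a])=[[b]]$; (D) $b([a])=[b]$, $b([b])=[b^{-1}]$; (E) $a$ maps principal gaps to principal gaps, exactly one of $b^{\pm1}$ maps a given principal gap to a principal gap, and the graph on principal gaps joining $J$ to $a(J)$ and to that image is connected. By (E) the principal gaps can be enumerated $I_1,I_1',\dots,I_k,I_k'$ with $b_i(I_i)=I_i'$, $b_i\in\{b,b^{-1}\}$, and $a(I_i')=I_{i+1}$ (mod $k$); $f_1=a\circ b_k\circ\cdots\circ a\circ b_1$ maps $I_1$ to itself. Property ( * ): $f_1$ has no fixed point in the open interval $I_1$ and $f_1^n(z)\to$ (endpoint of $I_1$ in $[a]$) for all $z\in I_1$. Property ( ** ): $X_\infty=\bigcap_{f}f^{-1}(X)$, $f$ ranging over the group generated by $a,b$, has empty interior. *)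

From Stdlib Require Import Reals Lra ZArith List Bool.
From Stdlib Require Import Relations Relation_Operators ClassicalEpsilon.
Import ListNotations.
Open Scope R_scope.

(* The circle S^1 = R/Z, points represented by their unique lift in [0,1). *)
Definition S1 : Type := { x : R | 0 <= x < 1 }.
Definition pos (x : S1) : R := proj1_sig x.

(* (x,y,z) are pairwise distinct and positively (anticlockwise) oriented,
   anticlockwise = direction of increasing angle 2*pi*t. *)
Definition ccw (x y z : S1) : Prop :=
  (pos x < pos y < pos z) \/ (pos y < pos z < pos x) \/ (pos z < pos x < pos y).

Definition dist (x y : S1) : R :=
  Rmin (Rabs (pos x - pos y)) (1 - Rabs (pos x - pos y)).

Definition Cont (f : S1 -> S1) : Prop :=
  forall x eps, 0 < eps -> exists delta, 0 < delta /\
    forall y, dist x y < delta -> dist (f x) (f y) < eps.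

Definition OrientHomeo (f : S1 -> S1) : Prop :=
  exists g : S1 -> S1,
    (forall x, g (f x) = x) /\ (forall x, f (g x) = x) /\
    Cont f /\ Cont g /\
    (forall x y z, ccw x y z -> ccw (f x) (f y) (f z)).

Definition closure (K : S1 -> Prop) (x : S1) : Prop :=
  forall eps, 0 < eps -> exists y, K y /\ dist x y < eps.

(* closed arc [u,v] (anticlockwise from u to v), used with u <> v *)
Definition carc (u v x : S1) : Prop := x = u \/ x = v \/ ccw u x v.

(* open arc (p,q) anticlockwise from p to q; when p = q it is S^1 \ {p} *)
Definition oarc (p q x : S1) : Prop := ccw p x q \/ (p = q /\ x <> p).

Definition isGap (K : S1 -> Prop) (p q : S1) : Prop :=
  K p /\ K q /\ (exists x, oarc p q x) /\ (forall x, oarc p q x -> ~ K x).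

Definition UnionOfArcs (k : nat) (S : S1 -> Prop) : Prop :=
  exists u v : nat -> S1,
    (forall i, (i < k)%nat -> u i <> v i) /\
    (forall i j x, (i < k)%nat -> (j < k)%nat -> i <> j ->
        carc (u i) (v i) x -> carc (u j) (v j) x -> False) /\
    (forall x, S x <-> exists i, (i < k)%nat /\ carc (u i) (v i) x).

(* Markov systems.  Gaps are represented by their endpoint pairs (p,q),
   the gap being the open arc (p,q).  b^{-1} = b o b since b^3 = id. *)
Section Markov.
Variables (a b : S1 -> S1) (A B Bi : S1 -> Prop).

Definition Xset (x : S1) : Prop := A x \/ B x \/ Bi x.

Definition gimg (f : S1 -> S1) (J : S1 * S1) : S1 * S1 := (f (fst J), f (snd J)).

Definition binv (x : S1) : S1 := b (b x).

Definition PrincipalGap (J : S1 * S1) : Prop :=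
  isGap Xset (fst J) (snd J) /\
  ((A (fst J) /\ (B (snd J) \/ Bi (snd J))) \/
   ((B (fst J) \/ Bi (fst J)) /\ A (snd J))).

Definition ComplementaryGap (J : S1 * S1) : Prop :=
  isGap Xset (fst J) (snd J) /\
  ((B (fst J) /\ Bi (snd J)) \/ (Bi (fst J) /\ B (snd J))).

(* [[b]] = union of the b^{+-1}-intervals and the complementary gaps *)
Definition BB (x : S1) : Prop :=
  B x \/ Bi x \/ exists J, ComplementaryGap J /\ oarc (fst J) (snd J) x.

Definition gapEdge (J J' : S1 * S1) : Prop :=
  PrincipalGap J /\ PrincipalGap J' /\
  (J' = gimg a J \/ J' = gimg b J \/ J' = gimg binv J).

Definition MarkovSystem (k : nat) : Prop :=
  (0 < k)%nat /\
  OrientHomeo a /\ (forall x, a (a x) = x) /\ (exists x, a x <> x) /\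
  OrientHomeo b /\ (forall x, b (b (b x)) = x) /\ (exists x, b x <> x) /\
  UnionOfArcs k A /\ UnionOfArcs k B /\ UnionOfArcs k Bi /\
  (forall x, A x -> B x -> False) /\ (forall x, A x -> Bi x -> False) /\
  (forall x, B x -> Bi x -> False) /\
  (forall p q, isGap Xset p q ->
     ~ (A p /\ A q) /\ ~ (B p /\ B q) /\ ~ (Bi p /\ Bi q)) /\
  (forall y, BB y <-> exists x, A x /\ a x = y) /\
  (forall y, B y <-> exists x, A x /\ b x = y) /\
  (forall y, Bi y <-> exists x, B x /\ b x = y) /\
  (forall J, PrincipalGap J -> PrincipalGap (gimg a J)) /\
  (forall J, PrincipalGap J ->
     (PrincipalGap (gimg b J) <-> ~ PrincipalGap (gimg binv J))) /\
  (forall J J', PrincipalGap J -> PrincipalGap J' ->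
     clos_refl_sym_trans _ gapEdge J J').

Definition bsel (J : S1 * S1) : S1 -> S1 :=
  if excluded_middle_informative (PrincipalGap (gimg b J)) then b else binv.

(* chainF n J = a o b_n o ... o a o b_1 along the enumeration starting at J *)
Fixpoint chainF (n : nat) (J : S1 * S1) : S1 -> S1 :=
  match n with
  | O => fun x => x
  | S n' => fun x =>
      chainF n' (gimg a (gimg (bsel J) J)) (a (bsel J x))
  end.

Definition StarProp (k : nat) (I1 : S1 * S1) : Prop :=
  let f1 := chainF k I1 in
  (forall z, oarc (fst I1) (snd I1) z -> f1 z <> z) /\
  (forall e, A e -> (e = fst I1 \/ e = snd I1) ->
     forall z, oarc (fst I1) (snd I1) z ->
       forall eps, 0 < eps -> exists N : nat, forall n : nat, (N <= n)%nat ->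
         dist (Nat.iter n f1 z) e < eps).
End Markov.

(* The group G = <alpha, beta | alpha^2 = beta^3 = e> = Z/2 * Z/3,
   elements = reduced words in alpha (LA), beta (LB), beta^2 (LB2). *)
Inductive letter := LA | LB | LB2.

Definition compat (x y : letter) : bool :=
  match x, y with
  | LA, LA => false
  | LA, _ => true
  | _, LA => true
  | _, _ => false
  end.

Fixpoint reduced (w : list letter) : bool :=
  match w with
  | [] => true
  | x :: w' => match w' with [] => true | y :: _ => compat x y && reduced w' end
  end.

Definition mulL (l : letter) (w : list letter) : list letter :=
  match l, w with
  | LA, LA :: w' => w'
  | LB, LB :: w' => LB2 :: w'
  | LB, LB2 :: w' => w'
  | LB2, LB :: w' => w'
  | LB2, LB2 :: w' => LB :: w'
  | _, _ => l :: w
  end.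

Lemma reduced_tail x w : reduced (x :: w) = true -> reduced w = true.
Proof.
  destruct w as [|y w]; simpl; auto.
  intro H; apply andb_prop in H; tauto.
Qed.

Lemma mulL_reduced l w : reduced w = true -> reduced (mulL l w) = true.
Proof.
  intro H.
  destruct l; destruct w as [|y w]; try reflexivity;
  destruct y; try (exact (reduced_tail _ _ H));
  destruct w as [|z w]; try reflexivity;
  destruct z; simpl in *; try discriminate; try exact H;
  try (rewrite H; reflexivity).
Qed.

Lemma fold_mulL_reduced u w :
  reduced w = true -> reduced (fold_right mulL w u) = true.
Proof.
  intro H; induction u as [|l u IH]; simpl; auto.
  apply mulL_reduced; exact IH.
Qed.

Definition G : Type := { w : list letter | reduced w = true }.

Definition gmul (g h : G) : G :=
  exist _ (fold_right mulL (proj1_sig h) (proj1_sig g))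
        (fold_mulL_reduced (proj1_sig g) _ (proj2_sig h)).

Definition circular_order (c : G -> G -> G -> Z) : Prop :=
  (forall g1 g2 g3, c g1 g2 g3 = 0%Z \/ c g1 g2 g3 = 1%Z \/ c g1 g2 g3 = (-1)%Z) /\
  (forall g1 g2 g3, c g1 g2 g3 = 0%Z <-> (g1 = g2 \/ g1 = g3 \/ g2 = g3)) /\
  (forall g1 g2 g3 g4,
     (c g2 g3 g4 - c g1 g3 g4 + c g1 g2 g4 - c g1 g2 g3)%Z = 0%Z) /\
  (forall g1 g2 g3 g4,
     c (gmul g4 g1) (gmul g4 g2) (gmul g4 g3) = c g1 g2 g3).

Fixpoint evalw (a b : S1 -> S1) (w : list letter) (x : S1) : S1 :=
  match w with
  | [] => x
  | LA :: w' => a (evalw a b w' x)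
  | LB :: w' => b (evalw a b w' x)
  | LB2 :: w' => b (b (evalw a b w' x))
  end.

Definition phi (a b : S1 -> S1) (g : G) : S1 -> S1 := evalw a b (proj1_sig g).

Definition gid : G := exist _ [] eq_refl.

(* Property "star-star" : X_infty = intersection of phi(g)^{-1}(X) has empty interior *)
Definition StarStarProp (a b : S1 -> S1) (A B Bi : S1 -> Prop) : Prop :=
  forall x eps, 0 < eps ->
    ~ (forall y, dist x y < eps -> forall g : G, Xset A B Bi (phi a b g y)).

Definition orbit (a b : S1 -> S1) (x0 : S1) (y : S1) : Prop :=
  exists g : G, phi a b g x0 = y.

Definition tight_at (a b : S1 -> S1) (x0 : S1) : Prop :=
  (forall g : G, phi a b g x0 = x0 -> g = gid) /\
  (forall p q, isGap (closure (orbit a b x0)) p q ->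
     orbit a b x0 p /\ orbit a b x0 q).

Definition dyn_realization (a b : S1 -> S1) (c : G -> G -> G -> Z) (x0 : S1) : Prop :=
  tight_at a b x0 /\
  forall g1 g2 g3,
    (c g1 g2 g3 = 1%Z <-> ccw (phi a b g1 x0) (phi a b g2 x0) (phi a b g3 x0)) /\
    (c g1 g2 g3 = (-1)%Z <-> ccw (phi a b g3 x0) (phi a b g2 x0) (phi a b g1 x0)).

(* Pick [x0] in the principal gap [I1].  Walking through the principal gaps
   I_1, I_1', I_2, ... with the maps b_i and a, a ping-pong argument shows that a
   reduced word either carries [x0] along this cycle of gaps or throws it into
   [a] or [[b]], which miss [I1].  So the elements of G bringing [x0] back to [I1]
   are the powers of the first-return map [ret] of the cycle, and ( * ) makes
   [ret] fixed-point free on [I1]: the action is free at [x0], and the circular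
   orientation of the orbit of [x0] pulls back to a circular order on G.
   For tightness, ( ** ) lets some element of G move a point of any gap of the
   orbit closure off X, hence (by (E)) into [I1] but off the orbit.  There the
   [ret]-orbit of [x0] accumulates only at the endpoint of [I1] in [a], so the
   point lies between two consecutive iterates [ret^n x0] and [ret^(n+1) x0],
   which are therefore the endpoints of the (moved) gap. *)

From Stdlib Require Import Reals Lra ZArith List Lia Wf_nat Relation_Operators.
From Stdlib Require Import Classical ClassicalEpsilon ProofIrrelevance.
Import ListNotations.
Open Scope R_scope.

(** * Circle geometry *)

Lemma S1_eq (x y : S1) : pos x = pos y -> x = y.
Proof. destruct x as [x hx], y as [y hy]; simpl; intros ->. f_equal; apply proof_irrelevance. Qed.

Lemma pos_bounds (x : S1) : 0 <= pos x < 1.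
Proof. exact (proj2_sig x). Qed.

Definition ccwR (r s t : R) : Prop := (r < s < t) \/ (s < t < r) \/ (t < r < s).
Definition distR (r s : R) : R := Rmin (Rabs (r - s)) (1 - Rabs (r - s)).

(* Measuring positions anticlockwise from a base point [x] turns every statement
   about the circle into one about reals in [0,1), which [lra] decides. *)
Definition turn (x y : S1) : R :=
  if Rle_dec (pos x) (pos y) then pos y - pos x else pos y - pos x + 1.

Lemma turn_bounds x y : 0 <= turn x y < 1.
Proof.
  unfold turn. pose proof (pos_bounds x); pose proof (pos_bounds y).
  destruct Rle_dec; lra.
Qed.

Lemma turn_self x : turn x x = 0.
Proof. unfold turn. destruct Rle_dec; lra. Qed.

Lemma turn_inj x y z : turn x y = turn x z -> y = z.
Proof.
  unfold turn. pose proof (pos_bounds x); pose proof (pos_bounds y); pose proof (pos_bounds z).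
  intro E; apply S1_eq. repeat destruct Rle_dec; lra.
Qed.

Lemma turn_pos x y : y <> x -> 0 < turn x y.
Proof.
  intros N. pose proof (turn_bounds x y).
  destruct (Req_dec (turn x y) 0) as [E|E]; [|lra].
  exfalso; apply N, (turn_inj x); rewrite E, turn_self; reflexivity.
Qed.

Ltac ccwR_solve := first [ left; lra | right; left; lra | right; right; lra ].

Lemma ccw_turn x p q r : ccw p q r <-> ccwR (turn x p) (turn x q) (turn x r).
Proof.
  unfold ccw, ccwR, turn.
  pose proof (pos_bounds x); pose proof (pos_bounds p);
  pose proof (pos_bounds q); pose proof (pos_bounds r).
  repeat destruct Rle_dec; split; intros [Hc|[Hc|Hc]]; ccwR_solve.
Qed.

Lemma dist_turn x p q : dist p q = distR (turn x p) (turn x q).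
Proof.
  unfold dist, distR, turn.
  pose proof (pos_bounds x); pose proof (pos_bounds p); pose proof (pos_bounds q).
  unfold Rmin, Rabs. repeat destruct Rle_dec; repeat destruct Rcase_abs; lra.
Qed.

Lemma ccw_cycle x y z : ccw x y z -> ccw y z x.
Proof. unfold ccw; intros [H|[H|H]]; ccwR_solve. Qed.

Lemma ccw_neq x y z : ccw x y z -> x <> y /\ y <> z /\ x <> z.
Proof.
  unfold ccw; intros Hc; repeat split; intro E; subst; destruct Hc as [H|[H|H]]; lra.
Qed.

Lemma ccw_total x y z : x <> y -> y <> z -> x <> z -> ccw x y z \/ ccw z y x.
Proof.
  intros H1 H2 H3.
  assert (pos x <> pos y) by (intro E; apply H1, S1_eq, E).
  assert (pos y <> pos z) by (intro E; apply H2, S1_eq, E).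
  assert (pos x <> pos z) by (intro E; apply H3, S1_eq, E).
  unfold ccw. destruct (Rlt_le_dec (pos x) (pos y)); destruct (Rlt_le_dec (pos y) (pos z));
  destruct (Rlt_le_dec (pos x) (pos z)); first [ left; ccwR_solve | right; ccwR_solve | lra ].
Qed.

Lemma ccw_from p x y : ccw p x y <-> 0 < turn p x < turn p y.
Proof.
  rewrite (ccw_turn p). unfold ccwR. rewrite turn_self.
  pose proof (turn_bounds p x); pose proof (turn_bounds p y).
  split; [intros [C|[C|C]]; lra | intros; ccwR_solve].
Qed.

Lemma ccw_from_trans p x y z : ccw p x y -> ccw p y z -> ccw p x z.
Proof. rewrite !ccw_from. lra. Qed.

Lemma ccw_from_asym p x y : ccw p x y -> ~ ccw p y x.
Proof. rewrite !ccw_from. lra. Qed.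

Lemma ccw_from_inner p u z v : ccw p u z -> ccw p z v -> ccw u z v.
Proof.
  intros H1 H2. rewrite ccw_from in H1, H2. rewrite (ccw_turn p). left; lra.
Qed.

Lemma ccw_from_outer p z w q : ccw p z q -> ccw p w q -> ccw z w q -> ccw p z w.
Proof.
  intros H1 H2 H3. rewrite ccw_from in H1, H2 |- *. rewrite (ccw_turn p) in H3.
  unfold ccwR in H3. lra.
Qed.

Lemma oarc_from p q u v o : ccw p u q -> ccw p v q -> ccw p u v -> oarc u v o ->
  ccw p o q /\ ccw p u o /\ ccw p o v.
Proof.
  intros H1 H2 H3 [C|[E _]]; [|subst; destruct (ccw_neq _ _ _ H3) as (_ & N & _); contradiction].
  rewrite ccw_from in H1, H2, H3. rewrite (ccw_turn p) in C. unfold ccwR in C.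
  rewrite !ccw_from. pose proof (turn_bounds p o). destruct C as [C|[C|C]]; lra.
Qed.

Lemma oarc_turn p q x : oarc p q x ->
  0 < turn x q <= turn x p /\
  (forall y, oarc p q y <-> turn x y < turn x q \/ turn x p < turn x y).
Proof.
  intros [Hc|[E Hx]].
  - destruct (ccw_neq _ _ _ Hc) as (N1 & N2 & _).
    pose proof (turn_pos _ _ N1). pose proof (turn_pos _ _ (not_eq_sym N2)).
    assert (Hr := proj1 (ccw_turn x _ _ _) Hc). unfold ccwR in Hr. rewrite turn_self in Hr.
    assert (turn x q < turn x p) by (destruct Hr as [C|[C|C]]; lra).
    split; [lra|]. intros y. pose proof (turn_bounds x y).
    unfold oarc. rewrite (ccw_turn x). unfold ccwR. split.
    + intros [[C|[C|C]]|[E _]]; [lra..|subst; lra].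
    + intros [C|C]; left; ccwR_solve.
  - subst q. pose proof (turn_pos _ _ (not_eq_sym Hx)). split; [lra|].
    intros y; unfold oarc; split.
    + intros [Hb|[_ Hy]].
      * rewrite (ccw_turn x) in Hb; unfold ccwR in Hb; lra.
      * assert (turn x y <> turn x p) by (intro E; apply Hy, (turn_inj x), E). lra.
    + intros Hb; right; split; [reflexivity|]. intro E; subst; lra.
Qed.

Lemma isGap_unique (K : S1 -> Prop) p q p' q' x :
  isGap K p q -> isGap K p' q' -> oarc p q x -> oarc p' q' x -> p = p' /\ q = q'.
Proof.
  intros (Kp & Kq & _ & G) (Kp' & Kq' & _ & G') H H'.
  destruct (oarc_turn _ _ _ H) as [R1 R2], (oarc_turn _ _ _ H') as [R1' R2'].
  assert (A1 : ~ oarc p q p') by (intro Z; exact (G _ Z Kp')).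
  assert (A2 : ~ oarc p q q') by (intro Z; exact (G _ Z Kq')).
  assert (A3 : ~ oarc p' q' p) by (intro Z; exact (G' _ Z Kp)).
  assert (A4 : ~ oarc p' q' q) by (intro Z; exact (G' _ Z Kq)).
  rewrite R2 in A1, A2. rewrite R2' in A3, A4.
  split; apply (turn_inj x); lra.
Qed.

Lemma isGap_snd_unique (K : S1 -> Prop) p q q' : isGap K p q -> isGap K p q' -> q = q'.
Proof.
  intros (Kp & Kq & _ & G) (_ & Kq' & _ & G').
  destruct (classic (q = q')) as [|N]; [assumption|exfalso].
  destruct (classic (q = p)) as [->|E].
  { apply (G q'); [right; split; auto | exact Kq']. }
  destruct (classic (q' = p)) as [->|E'].
  { apply (G' q); [right; split; auto | exact Kq]. }
  destruct (ccw_total p q q') as [C|C]; auto.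
  - apply (G' q); [left; exact C | exact Kq].
  - apply (G q'); [left; apply ccw_cycle, ccw_cycle, C | exact Kq'].
Qed.

Lemma isGap_fst_unique (K : S1 -> Prop) p p' q : isGap K p q -> isGap K p' q -> p = p'.
Proof.
  intros (Kp & Kq & _ & G) (Kp' & _ & _ & G').
  destruct (classic (p = p')) as [|N]; [assumption|exfalso].
  destruct (classic (q = p)) as [->|E].
  { apply (G p'); [right; split; auto | exact Kp']. }
  destruct (classic (q = p')) as [->|E'].
  { apply (G' p); [right; split; auto | exact Kp]. }
  destruct (ccw_total p p' q) as [C|C]; auto.
  - apply (G p'); [left; exact C | exact Kp'].
  - apply (G' p); [left; apply ccw_cycle, C | exact Kp].
Qed.

Lemma dist_refl x : dist x x = 0.
Proof. unfold dist. rewrite Rminus_diag, Rabs_R0. unfold Rmin; destruct Rle_dec; lra. Qed.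

Lemma dist_sym x y : dist x y = dist y x.
Proof. unfold dist. rewrite Rabs_minus_sym. reflexivity. Qed.

Lemma dist_nonneg x y : 0 <= dist x y.
Proof.
  unfold dist, Rmin. pose proof (pos_bounds x); pose proof (pos_bounds y).
  unfold Rabs; repeat destruct Rle_dec; repeat destruct Rcase_abs; lra.
Qed.

Lemma dist_triangle x y z : dist x z <= dist x y + dist y z.
Proof.
  unfold dist, Rmin.
  pose proof (pos_bounds x); pose proof (pos_bounds y); pose proof (pos_bounds z).
  unfold Rabs; repeat destruct Rle_dec; repeat destruct Rcase_abs; lra.
Qed.

Lemma dist_eq0 x y : dist x y = 0 -> x = y.
Proof.
  intros H; apply S1_eq. revert H. unfold dist, Rmin.
  pose proof (pos_bounds x); pose proof (pos_bounds y).
  unfold Rabs; repeat destruct Rle_dec; repeat destruct Rcase_abs; lra.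
Qed.

Lemma oarc_open u v x : oarc u v x ->
  exists eps, 0 < eps /\ forall y, dist x y < eps -> oarc u v y.
Proof.
  intros H. destruct (oarc_turn _ _ _ H) as [R1 R2]. pose proof (turn_bounds x u).
  exists (Rmin (turn x v) (1 - turn x u)). split; [unfold Rmin; destruct Rle_dec; lra|].
  intros y Hy. apply R2. rewrite (dist_turn x), turn_self in Hy.
  pose proof (turn_bounds x y). revert Hy. unfold distR, Rmin, Rabs.
  repeat destruct Rle_dec; repeat destruct Rcase_abs; lra.
Qed.

Lemma closure_incl (K : S1 -> Prop) y : K y -> closure K y.
Proof. intros H eps He. exists y; split; auto. rewrite dist_refl; exact He. Qed.

Lemma isGap_closure (K : S1 -> Prop) u v z : K u -> K v -> oarc u v z ->
  (forall o, oarc u v o -> ~ K o) -> isGap (closure K) u v.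
Proof.
  intros Ku Kv Hz Hno.
  repeat split; [apply closure_incl, Ku | apply closure_incl, Kv | exists z; exact Hz|].
  intros w Hw Kw. destruct (oarc_open _ _ _ Hw) as (e & He & Hball).
  destruct (Kw e He) as (o & Ko & Hdo). exact (Hno o (Hball o Hdo) Ko).
Qed.

Lemma ccw_near_snd p z q : ccw p z q -> exists eps, 0 < eps /\
  forall w, ccw p w q -> dist w q < eps -> ccw z w q.
Proof.
  intros H. apply ccw_from in H. pose proof (turn_bounds p q).
  exists (Rmin (turn p q - turn p z) (1 - turn p q)). split; [unfold Rmin; destruct Rle_dec; lra|].
  intros w Hw Hd. apply ccw_from in Hw. rewrite (dist_turn p) in Hd.
  rewrite (ccw_turn p). left. revert Hd. unfold distR, Rmin, Rabs.
  repeat destruct Rle_dec; repeat destruct Rcase_abs; lra.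
Qed.

Lemma ccw_near_fst p z q : ccw p z q -> exists eps, 0 < eps /\
  forall w, ccw p w q -> dist w p < eps -> ccw p w z.
Proof.
  intros H. apply ccw_from in H. pose proof (turn_bounds p q).
  exists (Rmin (turn p z) (1 - turn p q)). split; [unfold Rmin; destruct Rle_dec; lra|].
  intros w Hw Hd. apply ccw_from in Hw. rewrite (dist_turn p), turn_self in Hd.
  apply ccw_from. split; [lra|]. revert Hd. unfold distR, Rmin, Rabs.
  repeat destruct Rle_dec; repeat destruct Rcase_abs; lra.
Qed.

Lemma Cont_limit_fixed (f : S1 -> S1) (e z : S1) : Cont f ->
  (forall eps, 0 < eps -> exists N, forall n, (N <= n)%nat -> dist (Nat.iter n f z) e < eps) ->
  f e = e.
Proof.
  intros Hc Hl. apply dist_eq0.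
  destruct (Req_dec (dist (f e) e) 0) as [E|N]; [exact E|exfalso].
  pose proof (dist_nonneg (f e) e). set (eps := dist (f e) e) in *.
  destruct (Hc e (eps/2) ltac:(lra)) as (d & Hd & Hcd).
  destruct (Hl d Hd) as (N1 & H1). destruct (Hl (eps/2) ltac:(lra)) as (N2 & H2).
  set (n := (N1 + N2)%nat).
  assert (A1 : dist (f e) (f (Nat.iter n f z)) < eps/2).
  { apply Hcd. rewrite dist_sym. apply H1. unfold n; lia. }
  assert (A2 : dist (Nat.iter (S n) f z) e < eps/2) by (apply H2; unfold n; lia).
  simpl in A2. pose proof (dist_triangle (f e) (f (Nat.iter n f z)) e). unfold eps in *. lra.
Qed.

(* The orientation of three positions is the sign of the permutation sorting them;
   the cocycle identity is then an identity between signs of a linear order. *)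
Definition lin_sign (r s : R) : Z :=
  match total_order_T r s with
  | inleft (left _) => 1 | inleft (right _) => 0 | inright _ => -1
  end.
Definition orient3 (r s t : R) : Z := (lin_sign r s * lin_sign s t * lin_sign r t)%Z.

Ltac unfold_orient3 r s t :=
  unfold orient3, lin_sign;
  destruct (total_order_T r s) as [[|]|]; destruct (total_order_T s t) as [[|]|];
  destruct (total_order_T r t) as [[|]|]; simpl.

Lemma orient3_cases r s t :
  orient3 r s t = 0%Z \/ orient3 r s t = 1%Z \/ orient3 r s t = (-1)%Z.
Proof. unfold_orient3 r s t; auto. Qed.

Lemma orient3_eq1 r s t : orient3 r s t = 1%Z <-> ccwR r s t.
Proof.
  unfold ccwR. unfold_orient3 r s t; split; intros Hc;
  try discriminate; try reflexivity; try ccwR_solve; destruct Hc as [Hc|[Hc|Hc]]; lra.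
Qed.

Lemma orient3_eqN1 r s t : orient3 r s t = (-1)%Z <-> ccwR t s r.
Proof.
  unfold ccwR. unfold_orient3 r s t; split; intros Hc;
  try discriminate; try reflexivity; try ccwR_solve; destruct Hc as [Hc|[Hc|Hc]]; lra.
Qed.

Lemma orient3_eq0 r s t : orient3 r s t = 0%Z <-> (r = s \/ r = t \/ s = t).
Proof.
  unfold_orient3 r s t; split; intros Hc; try discriminate; try reflexivity;
  try (destruct Hc as [Hc|[Hc|Hc]]; lra); try (left; lra); try (right; left; lra);
  right; right; lra.
Qed.

Lemma orient3_cocycle r1 r2 r3 r4 :
  (orient3 r2 r3 r4 - orient3 r1 r3 r4 + orient3 r1 r2 r4 - orient3 r1 r2 r3)%Z = 0%Z.
Proof.
  unfold orient3, lin_sign.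
  destruct (total_order_T r1 r2) as [[|]|]; destruct (total_order_T r1 r3) as [[|]|];
  destruct (total_order_T r1 r4) as [[|]|]; destruct (total_order_T r2 r3) as [[|]|];
  destruct (total_order_T r2 r4) as [[|]|]; destruct (total_order_T r3 r4) as [[|]|];
  first [reflexivity | exfalso; lra].
Qed.

Definition orient (x y z : S1) : Z := orient3 (pos x) (pos y) (pos z).

Lemma orient_eq1 x y z : orient x y z = 1%Z <-> ccw x y z.
Proof. apply orient3_eq1. Qed.

Lemma orient_eqN1 x y z : orient x y z = (-1)%Z <-> ccw z y x.
Proof. apply orient3_eqN1. Qed.

Lemma orient_eq0 x y z : orient x y z = 0%Z <-> (x = y \/ x = z \/ y = z).
Proof.
  unfold orient. rewrite orient3_eq0. split.
  - intros [E|[E|E]]; [left|right; left|right; right]; apply S1_eq, E.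
  - intros [E|[E|E]]; subst; auto.
Qed.

Lemma finite_argmin (f : nat -> R) n : (0 < n)%nat ->
  exists i, (i < n)%nat /\ forall j, (j < n)%nat -> f i <= f j.
Proof.
  induction n as [|[|n] IH]; intros Hn; [lia| |].
  - exists 0%nat; split; [lia|]. intros j Hj; replace j with 0%nat by lia; lra.
  - destruct (IH ltac:(lia)) as (i & Hi & Hm).
    destruct (Rle_dec (f i) (f (S n))) as [Hle|Hgt].
    + exists i; split; [lia|]. intros j Hj.
      destruct (Nat.eq_dec j (S n)) as [->|N]; [exact Hle | apply Hm; lia].
    + exists (S n); split; [lia|]. intros j Hj.
      destruct (Nat.eq_dec j (S n)) as [->|N]; [lra|]. specialize (Hm j ltac:(lia)). lra.
Qed.

(* Unlike [UnionOfArcs], no disjointness is required, so covers can be concatenated. *)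
Definition ArcCover (n : nat) (Y : S1 -> Prop) : Prop :=
  exists U V : nat -> S1, (forall i, (i < n)%nat -> U i <> V i) /\
    (forall x, Y x <-> exists i, (i < n)%nat /\ carc (U i) (V i) x).

Lemma UnionOfArcs_cover k Y : UnionOfArcs k Y -> ArcCover k Y.
Proof. intros (U & V & H1 & _ & H3). exists U, V; auto. Qed.

Lemma ArcCover_union n m Y Z :
  ArcCover n Y -> ArcCover m Z -> ArcCover (n + m) (fun x => Y x \/ Z x).
Proof.
  intros (U1 & V1 & N1 & C1) (U2 & V2 & N2 & C2).
  exists (fun i => if Nat.ltb i n then U1 i else U2 (i - n)%nat),
         (fun i => if Nat.ltb i n then V1 i else V2 (i - n)%nat).
  split.
  - intros i Hi. destruct (Nat.ltb_spec i n); [apply N1 | apply N2]; lia.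
  - intros x. rewrite C1, C2. split.
    + intros [(i & Hi & Hc)|(i & Hi & Hc)].
      * exists i. destruct (Nat.ltb_spec i n); [split; [lia|exact Hc] | lia].
      * exists (n + i)%nat. destruct (Nat.ltb_spec (n + i) n); [lia|].
        replace (n + i - n)%nat with i by lia. split; [lia|exact Hc].
    + intros (i & Hi & Hc). destruct (Nat.ltb_spec i n).
      * left; exists i; auto.
      * right; exists (i - n)%nat; split; [lia|exact Hc].
Qed.

Lemma carc_turn z u v x : u <> v -> ~ carc u v z -> carc u v x ->
  0 < turn z u < turn z v /\ turn z u <= turn z x <= turn z v.
Proof.
  intros Nuv Nz Hx.
  assert (Nu : u <> z) by (intros E; apply Nz; left; auto).
  assert (Nv : v <> z) by (intros E; apply Nz; right; left; auto).
  assert (Nc : ~ ccw u z v) by (intros C; apply Nz; right; right; exact C).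
  pose proof (turn_pos _ _ Nu). pose proof (turn_pos _ _ Nv).
  assert (Hne : turn z u <> turn z v) by (intros E; apply Nuv, (turn_inj z), E).
  rewrite (ccw_turn z), turn_self in Nc. unfold ccwR in Nc.
  assert (Hlt : turn z u < turn z v).
  { destruct (Rlt_le_dec (turn z u) (turn z v)); auto. exfalso; apply Nc. right; left; lra. }
  split; [lra|].
  destruct Hx as [->|[->|C]]; [lra|lra|].
  rewrite (ccw_turn z) in C. unfold ccwR in C. pose proof (turn_bounds z x).
  destruct C as [C|[C|C]]; lra.
Qed.

(* The gap around [z] runs from the arc end closest to [z] clockwise to the
   arc start closest to [z] anticlockwise. *)
Lemma ArcCover_gap n Y z : (0 < n)%nat -> ArcCover n Y -> ~ Y z ->
  exists p q, isGap Y p q /\ oarc p q z.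
Proof.
  intros Hn (U & V & HUV & HY) Nz.
  assert (Hout : forall i x, (i < n)%nat -> carc (U i) (V i) x ->
     0 < turn z (U i) < turn z (V i) /\ turn z (U i) <= turn z x <= turn z (V i)).
  { intros i x Hi Hx. apply carc_turn; auto. intros Hc; apply Nz, HY; eauto. }
  destruct (finite_argmin (fun i => turn z (U i)) n Hn) as (i0 & Hi0 & Hm).
  destruct (finite_argmin (fun i => - turn z (V i)) n Hn) as (j0 & Hj0 & HM).
  set (q := U i0). set (p := V j0).
  assert (Yq : Y q) by (apply HY; exists i0; split; [exact Hi0 | left; reflexivity]).
  assert (Yp : Y p) by (apply HY; exists j0; split; [exact Hj0 | right; left; reflexivity]).
  destruct (Hout i0 q Hi0 (or_introl eq_refl)) as [Hq _].
  destruct (Hout j0 p Hj0 (or_intror (or_introl eq_refl))) as [Hp _].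
  pose proof (Hm j0 Hj0). simpl in *.
  assert (Hzin : oarc p q z).
  { left. rewrite (ccw_turn z), turn_self. right; left. unfold p, q in *; lra. }
  exists p, q. repeat split; auto.
  - exists z; exact Hzin.
  - intros x Hx Yx. apply HY in Yx as (i & Hi & Hc).
    destruct (Hout i x Hi Hc) as [_ [H1 H2]].
    pose proof (Hm i Hi). pose proof (HM i Hi). simpl in *.
    apply (oarc_turn _ _ _ Hzin) in Hx.
    unfold p, q in *. lra.
Qed.

(** * Reduced words and the action of G *)

Definition letter_inv (l : letter) : letter :=
  match l with LA => LA | LB => LB2 | LB2 => LB end.
Definition word_inv (u : list letter) : list letter := rev (map letter_inv u).

Lemma word_inv_cons l u : word_inv (l :: u) = word_inv u ++ [letter_inv l].
Proof. reflexivity. Qed.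

Lemma mulL_reduced_cons l w : reduced (l :: w) = true -> mulL l w = l :: w.
Proof.
  destruct l, w as [|x w]; try reflexivity; destruct x; simpl; try reflexivity;
  intro H; try discriminate; destruct w as [|y w]; try discriminate; destruct y; discriminate.
Qed.

Lemma fold_mulL_nil_reduced w : reduced w = true -> fold_right mulL [] w = w.
Proof.
  induction w as [|l w IH]; intros H; [reflexivity|].
  simpl. rewrite IH by exact (reduced_tail _ _ H). apply mulL_reduced_cons, H.
Qed.

Lemma mulL_letter_inv l z : reduced z = true -> mulL l (mulL (letter_inv l) z) = z.
Proof.
  intros H. destruct l, z as [|x z]; try reflexivity; destruct x; simpl; try reflexivity;
  destruct z as [|y z]; try reflexivity; destruct y; simpl in H; try discriminate; reflexivity.
Qed.

Lemma fold_mulL_word_inv u z : reduced z = true -> fold_right mulL z (u ++ word_inv u) = z.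
Proof.
  revert z; induction u as [|l u IH]; intros z Hz; [reflexivity|].
  rewrite word_inv_cons. simpl. rewrite app_assoc, fold_right_app. simpl.
  rewrite IH by (apply mulL_reduced, Hz). apply mulL_letter_inv, Hz.
Qed.

Lemma G_eq (g h : G) : proj1_sig g = proj1_sig h -> g = h.
Proof. destruct g as [g Hg], h as [h Hh]; simpl; intros ->. f_equal; apply proof_irrelevance. Qed.

Definition word_elt (u : list letter) : G :=
  exist _ (fold_right mulL [] u) (fold_mulL_reduced u [] eq_refl).

Lemma OrientHomeo_ccw f : OrientHomeo f -> forall x y z, ccw x y z -> ccw (f x) (f y) (f z).
Proof. intros (g & _ & _ & _ & _ & H). exact H. Qed.

Lemma OrientHomeo_cont f : OrientHomeo f -> Cont f.
Proof. intros (g & _ & _ & H & _). exact H. Qed.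

Lemma Cont_id : Cont (fun x => x).
Proof. intros x eps He; exists eps; split; auto. Qed.

Lemma Cont_comp f g : Cont f -> Cont g -> Cont (fun x => f (g x)).
Proof.
  intros Hf Hg x eps He. destruct (Hf (g x) eps He) as (d1 & Hd1 & H1).
  destruct (Hg x d1 Hd1) as (d2 & Hd2 & H2). exists d2; split; auto.
Qed.

Lemma Cont_ext f g : (forall x, f x = g x) -> Cont f -> Cont g.
Proof.
  intros E Hf x eps He. destruct (Hf x eps He) as (d & Hd & H). exists d; split; auto.
  intros y Hy. rewrite <- !E. apply H, Hy.
Qed.

Section Action.
Variables a b : S1 -> S1.

Definition letter_map (l : letter) : S1 -> S1 := evalw a b [l].

Lemma evalw_cons l w x : evalw a b (l :: w) x = letter_map l (evalw a b w x).
Proof. destruct l; reflexivity. Qed.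

Lemma evalw_app u v x : evalw a b (u ++ v) x = evalw a b u (evalw a b v x).
Proof.
  induction u as [|l u IH]; [reflexivity|]. simpl app. rewrite !evalw_cons, IH. reflexivity.
Qed.

Hypotheses (a_invol : forall x, a (a x) = x) (b_cube : forall x, b (b (b x)) = x).

Lemma evalw_mulL l w x : evalw a b (mulL l w) x = evalw a b (l :: w) x.
Proof. destruct l, w as [|y w]; try reflexivity; destruct y; simpl; auto. Qed.

Lemma evalw_fold g h x : evalw a b (fold_right mulL h g) x = evalw a b g (evalw a b h x).
Proof.
  induction g as [|l g IH]; [reflexivity|].
  simpl fold_right. rewrite evalw_mulL, !evalw_cons, IH. reflexivity.
Qed.

Lemma phi_gmul g h x : phi a b (gmul g h) x = phi a b g (phi a b h x).
Proof. apply evalw_fold. Qed.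

Lemma phi_word_elt u x : phi a b (word_elt u) x = evalw a b u x.
Proof. apply evalw_fold. Qed.

Lemma orbit_evalw x0 y u : orbit a b x0 y -> orbit a b x0 (evalw a b u y).
Proof.
  intros [g <-]. exists (word_elt (u ++ proj1_sig g)).
  rewrite phi_word_elt, evalw_app. reflexivity.
Qed.

Lemma orbit_refl x0 : orbit a b x0 x0.
Proof. exists gid. reflexivity. Qed.

Lemma letter_map_inv l x : letter_map (letter_inv l) (letter_map l x) = x.
Proof. destruct l; unfold letter_map; simpl; auto. Qed.

Lemma letter_map_inv_r l x : letter_map l (letter_map (letter_inv l) x) = x.
Proof. destruct l; unfold letter_map; simpl; auto. Qed.

Lemma evalw_word_inv u x : evalw a b (word_inv u) (evalw a b u x) = x.
Proof.
  induction u as [|l u IH]; [reflexivity|].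
  rewrite word_inv_cons, evalw_app, !evalw_cons. simpl evalw at 2. rewrite letter_map_inv. apply IH.
Qed.

Lemma evalw_word_inv_r u x : evalw a b u (evalw a b (word_inv u) x) = x.
Proof.
  revert x; induction u as [|l u IH]; intros x; [reflexivity|].
  rewrite word_inv_cons, evalw_app, !evalw_cons. simpl evalw at 3. rewrite IH.
  apply letter_map_inv_r.
Qed.

Lemma evalw_inj u x y : evalw a b u x = evalw a b u y -> x = y.
Proof. intros E. rewrite <- (evalw_word_inv u x), <- (evalw_word_inv u y), E. reflexivity. Qed.

Lemma phi_inj_of_free x0 : (forall g : G, phi a b g x0 = x0 -> g = gid) ->
  forall g1 g2 : G, phi a b g1 x0 = phi a b g2 x0 -> g1 = g2.
Proof.
  intros Free [w1 R1] [w2 R2] E. unfold phi in E; simpl in E.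
  assert (Hg : phi a b (word_elt (word_inv w1 ++ w2)) x0 = x0).
  { rewrite phi_word_elt, evalw_app, <- E, evalw_word_inv. reflexivity. }
  apply Free, (f_equal (@proj1_sig _ _)) in Hg. simpl in Hg.
  rewrite fold_right_app, fold_mulL_nil_reduced in Hg by exact R2.
  apply G_eq; simpl.
  rewrite <- (fold_mulL_word_inv w1 w2 R2), fold_right_app, Hg.
  symmetry; apply fold_mulL_nil_reduced, R1.
Qed.

Hypotheses (a_homeo : OrientHomeo a) (b_homeo : OrientHomeo b).

Lemma letter_map_ccw l x y z : ccw x y z -> ccw (letter_map l x) (letter_map l y) (letter_map l z).
Proof.
  intros H. destruct l; unfold letter_map; simpl;
  repeat (apply OrientHomeo_ccw; [assumption|]); exact H.
Qed.

Lemma evalw_ccw u x y z : ccw x y z -> ccw (evalw a b u x) (evalw a b u y) (evalw a b u z).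
Proof.
  induction u as [|l u IH]; intros H; [exact H|].
  rewrite !evalw_cons. apply letter_map_ccw, IH, H.
Qed.

Lemma orient_evalw u x y z : orient (evalw a b u x) (evalw a b u y) (evalw a b u z) = orient x y z.
Proof.
  destruct (orient3_cases (pos x) (pos y) (pos z)) as [E|[E|E]];
    fold (orient x y z) in E; rewrite E.
  - apply orient_eq0 in E. apply orient_eq0. destruct E as [E|[E|E]]; rewrite E; auto.
  - apply orient_eq1 in E. apply orient_eq1, evalw_ccw, E.
  - apply orient_eqN1 in E. apply orient_eqN1, evalw_ccw, E.
Qed.

Lemma letter_map_cont l : Cont (letter_map l).
Proof.
  destruct l; unfold letter_map; simpl.
  - apply OrientHomeo_cont, a_homeo.
  - apply OrientHomeo_cont, b_homeo.
  - apply Cont_comp; apply OrientHomeo_cont, b_homeo.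
Qed.

Lemma evalw_cont u : Cont (evalw a b u).
Proof.
  induction u as [|l u IH]; [exact Cont_id|].
  apply (Cont_ext (fun x => letter_map l (evalw a b u x))).
  - intros x; rewrite evalw_cons; reflexivity.
  - apply Cont_comp; [apply letter_map_cont | exact IH].
Qed.

Lemma closure_orbit_evalw x0 u y :
  closure (orbit a b x0) y -> closure (orbit a b x0) (evalw a b u y).
Proof.
  intros Hc eps He. destruct (evalw_cont u y eps He) as (d & Hd & H).
  destruct (Hc d Hd) as (o & Ho & Hdo). exists (evalw a b u o).
  split; [apply orbit_evalw, Ho | apply H, Hdo].
Qed.

Lemma oarc_evalw u p q x : oarc p q x -> oarc (evalw a b u p) (evalw a b u q) (evalw a b u x).
Proof.
  intros [H|[E N]]; [left; apply evalw_ccw, H | subst q; right; split; [reflexivity|]].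
  intros E; apply N, (evalw_inj u), E.
Qed.

Lemma isGap_evalw (K : S1 -> Prop) u p q :
  (forall y, K y -> K (evalw a b u y)) -> (forall y, K y -> K (evalw a b (word_inv u) y)) ->
  isGap K p q -> isGap K (evalw a b u p) (evalw a b u q).
Proof.
  intros H1 H2 (Kp & Kq & (x & Hx) & G). repeat split; auto.
  - exists (evalw a b u x). apply oarc_evalw, Hx.
  - intros y Hy Ky. apply (G (evalw a b (word_inv u) y)); [|apply H2, Ky].
    rewrite <- (evalw_word_inv u p), <- (evalw_word_inv u q). apply oarc_evalw, Hy.
Qed.

Definition orbit_order (x0 : S1) (g1 g2 g3 : G) : Z :=
  orient (phi a b g1 x0) (phi a b g2 x0) (phi a b g3 x0).

Lemma orbit_order_circular x0 :
  (forall g : G, phi a b g x0 = x0 -> g = gid) -> circular_order (orbit_order x0).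
Proof.
  intros Free. unfold orbit_order. repeat split.
  - intros g1 g2 g3. apply orient3_cases.
  - intros H. apply orient_eq0 in H as [E|[E|E]]; apply (phi_inj_of_free x0 Free) in E; auto.
  - intros H. apply orient_eq0. destruct H as [E|[E|E]]; subst; auto.
  - intros g1 g2 g3 g4. apply orient3_cocycle.
  - intros g1 g2 g3 g4. rewrite !phi_gmul. apply orient_evalw.
Qed.

End Action.

(** * Consecutive points of an orbit of an increasing map *)

Lemma nat_least (P : nat -> Prop) n : P n -> exists m, P m /\ forall j, (j < m)%nat -> ~ P j.
Proof.
  intros Hn.
  destruct (dec_inh_nat_subset_has_unique_least_element P (fun j => classic (P j))
              (ex_intro _ n Hn)) as (m & (Pm & Hmin) & _).
  exists m; split; [exact Pm|]. intros j Hj Pj. specialize (Hmin j Pj). lia.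
Qed.

Lemma iter_strict_incr (lt : S1 -> S1 -> Prop) (f : S1 -> S1) x :
  (forall x y z, lt x y -> lt y z -> lt x z) ->
  (forall n x y, lt x y -> lt (Nat.iter n f x) (Nat.iter n f y)) ->
  lt x (f x) -> forall n, lt x (Nat.iter (S n) f x).
Proof.
  intros Htrans Hmono H n. induction n as [|n IH]; [exact H|].
  apply (Htrans _ _ _ IH). rewrite (Nat.iter_succ_r (S n)). apply Hmono, H.
Qed.

(* [O_iter_meet] says that the points of [O] in [D] are the [h^n x0], [n] an integer. *)
Section ConsecutiveOrbitPoints.
Variables (D O : S1 -> Prop) (lt : S1 -> S1 -> Prop) (h : S1 -> S1) (x0 : S1).
Hypotheses
  (lt_trans : forall x y z, lt x y -> lt y z -> lt x z)
  (lt_asym : forall x y, lt x y -> ~ lt y x)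
  (lt_total : forall x y, D x -> D y -> x <> y -> lt x y \/ lt y x)
  (D_h : forall x, D x -> D (h x))
  (h_mono : forall x y, lt x y -> lt (h x) (h y))
  (h_onto : forall y, D y -> O y -> exists y', D y' /\ O y' /\ h y' = y)
  (O_x0 : O x0) (D_x0 : D x0) (O_h : forall y, O y -> O (h y))
  (h_nofix : forall x, D x -> h x <> x)
  (iter_above : forall z, D z -> exists N, lt z (Nat.iter N h x0))
  (iter_beyond : forall z, D z -> exists M, lt x0 (Nat.iter M h z))
  (O_iter_meet : forall y, D y -> O y -> exists i j, Nat.iter i h y = Nat.iter j h x0).

Lemma lt_irrefl x : ~ lt x x.
Proof. intros H. exact (lt_asym x x H H). Qed.

Lemma iter_D n x : D x -> D (Nat.iter n h x).
Proof. apply Nat.iter_invariant, D_h. Qed.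

Lemma iter_O n x : O x -> O (Nat.iter n h x).
Proof. apply Nat.iter_invariant, O_h. Qed.

Lemma iter_mono n x y : lt x y -> lt (Nat.iter n h x) (Nat.iter n h y).
Proof. intros H; induction n; simpl; auto. Qed.

Lemma iter_reflect n x y : D x -> D y -> lt (Nat.iter n h x) (Nat.iter n h y) -> lt x y.
Proof.
  intros Hx Hy H. destruct (classic (x = y)) as [<-|N]; [exfalso; exact (lt_irrefl _ H)|].
  destruct (lt_total x y Hx Hy N) as [C|C]; [exact C|].
  exfalso; exact (lt_asym _ _ H (iter_mono n _ _ C)).
Qed.

Lemma x0_lt_h : lt x0 (h x0).
Proof.
  destruct (lt_total x0 (h x0) D_x0 (D_h _ D_x0) (not_eq_sym (h_nofix _ D_x0))) as [C|C];
    [exact C|exfalso].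
  pose proof (iter_strict_incr (fun u v => lt v u) h x0
    (fun u v w H1 H2 => lt_trans _ _ _ H2 H1) (fun n u v => iter_mono n v u) C) as Hd.
  destruct (iter_above x0 D_x0) as ([|N] & HN); [exact (lt_irrefl _ HN)|].
  exact (lt_asym _ _ HN (Hd N)).
Qed.

Lemma iter_x0_lt m n : (m < n)%nat -> lt (Nat.iter m h x0) (Nat.iter n h x0).
Proof.
  intros H. induction n as [|n IH]; [lia|].
  assert (Hs : lt (Nat.iter n h x0) (Nat.iter (S n) h x0))
    by (rewrite Nat.iter_succ_r; apply iter_mono, x0_lt_h).
  destruct (Nat.eq_dec m n) as [<-|N]; [exact Hs|]. exact (lt_trans _ _ _ (IH ltac:(lia)) Hs).
Qed.

Lemma iter_x0_lt_inv m n : lt (Nat.iter m h x0) (Nat.iter n h x0) -> (m < n)%nat.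
Proof.
  intros H. destruct (Nat.lt_ge_cases m n) as [|Hl]; [assumption|exfalso].
  destruct (Nat.eq_dec m n) as [<-|N]; [exact (lt_irrefl _ H)|].
  exact (lt_asym _ _ H (iter_x0_lt n m ltac:(lia))).
Qed.

Lemma no_orbit_between u o : O u -> D u -> O o -> D o -> lt u o -> lt o (h u) -> False.
Proof.
  intros Ou Du Oo Do H1 H2.
  destruct (O_iter_meet u Du Ou) as (i1 & j1 & E1), (O_iter_meet o Do Oo) as (i2 & j2 & E2).
  assert (Eu : Nat.iter (i2 + i1) h u = Nat.iter (i2 + j1) h x0)
    by (rewrite !Nat.iter_add, E1; reflexivity).
  assert (Eo : Nat.iter (i2 + i1) h o = Nat.iter (i1 + j2) h x0)
    by (rewrite Nat.add_comm, !Nat.iter_add, E2; reflexivity).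
  apply (iter_mono (i2 + i1)) in H1, H2.
  rewrite Nat.iter_swap, Eu, <- Nat.iter_succ in H2. rewrite Eu in H1. rewrite Eo in H1, H2.
  apply iter_x0_lt_inv in H1, H2. lia.
Qed.

Lemma iter_onto n y : D y -> O y -> exists y', D y' /\ O y' /\ Nat.iter n h y' = y.
Proof.
  revert y; induction n as [|n IH]; intros y Dy Oy; [exists y; auto|].
  destruct (h_onto y Dy Oy) as (y1 & D1 & O1 & <-).
  destruct (IH y1 D1 O1) as (y2 & D2 & O2 & <-).
  exists y2; repeat split; auto.
Qed.

Definition orbit_neighbours (z : S1) : Prop :=
  exists u, O u /\ D u /\ lt u z /\ lt z (h u) /\
    forall o, D o -> O o -> lt u o -> lt o (h u) -> False.

(* Above [x0]: [u] is the last forward iterate of [x0] below [z]. *)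
Lemma orbit_neighbours_above z : D z -> ~ O z -> lt x0 z -> orbit_neighbours z.
Proof.
  intros Dz Nz C.
  destruct (iter_above z Dz) as (N & HN).
  destruct (nat_least (fun n => lt z (Nat.iter n h x0)) N HN) as ([|n] & Hn & Hmin);
    [exfalso; exact (lt_asym _ _ C Hn)|].
  exists (Nat.iter n h x0).
  assert (Ou : O (Nat.iter n h x0)) by apply (iter_O n x0 O_x0).
  assert (Du : D (Nat.iter n h x0)) by apply (iter_D n x0 D_x0).
  repeat split; auto.
  - assert (Ne : Nat.iter n h x0 <> z) by (intros E; apply Nz; rewrite <- E; exact Ou).
    destruct (lt_total _ _ Du Dz Ne) as [C'|C']; [exact C'|].
    exfalso; apply (Hmin n); [lia | exact C'].
  - intros o Do Oo. apply no_orbit_between; assumption.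
Qed.

(* Below [x0]: [u] is the backward iterate of [x0] of the order needed to push
   [z] above [x0]. *)
Lemma orbit_neighbours_below z : D z -> ~ O z -> lt z x0 -> orbit_neighbours z.
Proof.
  intros Dz Nz C.
  destruct (iter_beyond z Dz) as (M & HM).
  destruct (nat_least (fun n => lt x0 (Nat.iter n h z)) M HM) as ([|m] & Hm & Hmin);
    [exfalso; exact (lt_asym _ _ C Hm)|].
  destruct (iter_onto (S m) x0 D_x0 O_x0) as (u & Du & Ou & Eu).
  exists u. repeat split; auto.
  - apply (iter_reflect (S m)); auto. rewrite Eu. exact Hm.
  - assert (Ne : Nat.iter m h z <> x0).
    { intros E. destruct (iter_onto m x0 D_x0 O_x0) as (v & Dv & Ov & Ev).
      apply Nz. replace z with v; [exact Ov|].
      destruct (classic (v = z)) as [|N']; [assumption|exfalso].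
      destruct (lt_total v z Dv Dz N') as [C'|C']; apply (iter_mono m) in C';
        rewrite E, Ev in C'; exact (lt_irrefl _ C'). }
    destruct (lt_total _ _ (iter_D m z Dz) D_x0 Ne) as [C'|C'];
      [|exfalso; apply (Hmin m); [lia | exact C']].
    apply (iter_reflect m); auto. rewrite Nat.iter_swap, <- Nat.iter_succ, Eu. exact C'.
  - intros o Do Oo. apply no_orbit_between; assumption.
Qed.

Lemma orbit_neighbours_out z : D z -> ~ O z -> orbit_neighbours z.
Proof.
  intros Dz Nz.
  assert (Ne : x0 <> z) by (intros <-; exact (Nz O_x0)).
  destruct (lt_total x0 z D_x0 Dz Ne) as [C|C];
    [apply orbit_neighbours_above | apply orbit_neighbours_below]; assumption.
Qed.

End ConsecutiveOrbitPoints.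

(** * Combinatorics of a Markov system *)

Section Markov.
Variables (a b : S1 -> S1) (A B Bi : S1 -> Prop) (k : nat).
Hypothesis HM : MarkovSystem a b A B Bi k.

Local Notation X := (Xset A B Bi).
Local Notation PG := (PrincipalGap A B Bi).
Local Notation CG := (ComplementaryGap A B Bi).
Local Notation BBs := (BB A B Bi).
Local Notation lf := (letter_map a b).
Local Notation evalw := (evalw a b).

Lemma markov_k_pos : (0 < k)%nat.
Proof. apply HM. Qed.
Lemma markov_a_homeo : OrientHomeo a.
Proof. apply HM. Qed.
Lemma markov_a_invol x : a (a x) = x.
Proof. apply HM. Qed.
Lemma markov_b_homeo : OrientHomeo b.
Proof. apply HM. Qed.
Lemma markov_b_cube x : b (b (b x)) = x.
Proof. apply HM. Qed.

#[local] Hint Resolve markov_a_homeo markov_a_invol markov_b_homeo markov_b_cube : core.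

Lemma markov_X_cover : ArcCover (k + (k + k)) X.
Proof. apply ArcCover_union; [|apply ArcCover_union]; apply UnionOfArcs_cover, HM. Qed.

Lemma markov_gap_ends p q : isGap X p q -> ~ (A p /\ A q) /\ ~ (B p /\ B q) /\ ~ (Bi p /\ Bi q).
Proof. apply HM. Qed.

Lemma markov_PG_a J : PG J -> PG (gimg a J).
Proof. apply HM. Qed.

Lemma markov_PG_connected J J' : PG J -> PG J' -> clos_refl_sym_trans _ (gapEdge a b A B Bi) J J'.
Proof. apply HM. Qed.

Lemma markov_B_b y : B y <-> exists x, A x /\ b x = y.
Proof. apply HM. Qed.
Lemma markov_Bi_b y : Bi y <-> exists x, B x /\ b x = y.
Proof. apply HM. Qed.
Lemma markov_BB_a y : BBs y <-> exists x, A x /\ a x = y.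
Proof. apply HM. Qed.

Lemma A_disj_B x : A x -> B x -> False.
Proof. apply HM. Qed.
Lemma A_disj_Bi x : A x -> Bi x -> False.
Proof. apply HM. Qed.

Lemma A_b x : A x -> B (b x).
Proof. intros H. apply markov_B_b; eauto. Qed.
Lemma B_b x : B x -> Bi (b x).
Proof. intros H. apply markov_Bi_b; eauto. Qed.
Lemma Bi_b x : Bi x -> A (b x).
Proof.
  intros H. apply markov_Bi_b in H as (y & Hy & <-). apply markov_B_b in Hy as (z & Hz & <-).
  rewrite markov_b_cube; exact Hz.
Qed.
Lemma A_a x : A x -> BBs (a x).
Proof. intros H. apply markov_BB_a; eauto. Qed.
Lemma BB_a x : BBs x -> A (a x).
Proof. intros H. apply markov_BB_a in H as (y & Hy & <-). rewrite markov_a_invol; exact Hy. Qed.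

Lemma BB_disj_A x : BBs x -> A x -> False.
Proof.
  intros [H|[H|(J & ((_ & _ & _ & G) & _) & Hx)]] HA.
  - exact (A_disj_B x HA H).
  - exact (A_disj_Bi x HA H).
  - apply (G x Hx). left; exact HA.
Qed.

Lemma X_b x : X x -> X (b x).
Proof.
  intros [H|[H|H]]; unfold Xset;
    [right; left; apply A_b | right; right; apply B_b | left; apply Bi_b]; exact H.
Qed.

Lemma isGap_X_b p q : isGap X p q -> isGap X (b p) (b q).
Proof.
  intros G.
  apply (isGap_evalw a b markov_a_invol markov_b_cube markov_a_homeo markov_b_homeo X [LB]);
    auto; intros y Hy; repeat apply X_b; exact Hy.
Qed.

Lemma isGap_X_bb p q : isGap X p q -> isGap X (b (b p)) (b (b q)).
Proof. intros G. apply isGap_X_b, isGap_X_b, G. Qed.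

Lemma CG_disj_PG J : CG J -> PG J -> False.
Proof.
  intros (_ & [[H1 H2]|[H1 H2]]) (_ & [[H3 [H4|H4]]|[[H3|H3] H4]]);
  eauto using A_disj_B, A_disj_Bi.
Qed.

Lemma PG_b_cases J : PG J ->
  (PG (gimg b J) /\ CG (gimg (lf LB2) J)) \/ (PG (gimg (lf LB2) J) /\ CG (gimg b J)).
Proof.
  destruct J as [p q]. intros [G T]. simpl in *.
  pose proof (isGap_X_b _ _ G). pose proof (isGap_X_bb _ _ G).
  unfold PrincipalGap, ComplementaryGap, gimg, letter_map; simpl.
  destruct T as [[Ap [Bq|Bq]]|[[Bp|Bp] Aq]].
  - pose proof (A_b _ Ap); pose proof (B_b _ Bq); pose proof (B_b _ (A_b _ Ap));
    pose proof (Bi_b _ (B_b _ Bq)). right; tauto.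
  - pose proof (A_b _ Ap); pose proof (Bi_b _ Bq); pose proof (B_b _ (A_b _ Ap));
    pose proof (A_b _ (Bi_b _ Bq)). left; tauto.
  - pose proof (B_b _ Bp); pose proof (A_b _ Aq); pose proof (Bi_b _ (B_b _ Bp));
    pose proof (B_b _ (A_b _ Aq)). right; tauto.
  - pose proof (Bi_b _ Bp); pose proof (A_b _ Aq); pose proof (A_b _ (Bi_b _ Bp));
    pose proof (B_b _ (A_b _ Aq)). left; tauto.
Qed.

Definition bsel_letter (J : S1 * S1) : letter :=
  if excluded_middle_informative (PG (gimg b J)) then LB else LB2.

Lemma bsel_letter_map J x : bsel b A B Bi J x = lf (bsel_letter J) x.
Proof. unfold bsel, bsel_letter, binv. destruct excluded_middle_informative; reflexivity. Qed.

Lemma bsel_letter_spec J : PG J -> PG (gimg (lf (bsel_letter J)) J) /\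
   (forall l, l <> LA -> l <> bsel_letter J -> CG (gimg (lf l) J)).
Proof.
  intros HJ. unfold bsel_letter.
  destruct (PG_b_cases J HJ) as [[P C]|[P C]]; destruct excluded_middle_informative as [e|n];
    try contradiction; try (exfalso; eapply CG_disj_PG; eauto; fail);
    (split; [exact P|]); intros [] N1 N2; try congruence; exact C.
Qed.

Lemma PG_A_end J : PG J -> A (fst J) \/ A (snd J).
Proof. intros (_ & [[H _]|[_ H]]); auto. Qed.

Lemma PG_ends_neq J : PG J -> fst J <> snd J.
Proof.
  intros (_ & [[H1 [H2|H2]]|[[H1|H1] H2]]) E; rewrite E in *;
  eauto using A_disj_B, A_disj_Bi.
Qed.

Lemma letter_map_not_A l x : A x -> ~ A (lf l x).
Proof.
  intros H1 H2. destruct l; unfold letter_map in H2; simpl in H2.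
  - exact (BB_disj_A _ (A_a _ H1) H2).
  - exact (A_disj_B _ H2 (A_b _ H1)).
  - exact (A_disj_Bi _ H2 (B_b _ (A_b _ H1))).
Qed.

Lemma gimg_letter_neq l J : PG J -> gimg (lf l) J <> J.
Proof.
  intros HJ E. destruct J as [p q]. injection E as E1 E2.
  destruct (PG_A_end _ HJ) as [H|H]; simpl in H.
  - apply (letter_map_not_A l p H). rewrite E1; exact H.
  - apply (letter_map_not_A l q H). rewrite E2; exact H.
Qed.

Lemma gimg_letter_inv l J : gimg (lf (letter_inv l)) (gimg (lf l) J) = J.
Proof. destruct J as [p q]. unfold gimg; simpl. rewrite !letter_map_inv; auto. Qed.

Lemma bsel_letter_back J : PG J ->
  bsel_letter (gimg (lf (bsel_letter J)) J) = letter_inv (bsel_letter J).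
Proof.
  intros HJ. destruct (bsel_letter_spec J HJ) as [P _].
  set (J' := gimg (lf (bsel_letter J)) J) in *.
  assert (HP : PG (gimg (lf (letter_inv (bsel_letter J))) J'))
    by (unfold J'; rewrite gimg_letter_inv; exact HJ).
  revert HP. unfold bsel_letter at 1 2 3.
  destruct (PG_b_cases J' P) as [[P1 C1]|[P1 C1]];
  repeat destruct excluded_middle_informative; simpl; intros HP; try reflexivity; try contradiction;
  exfalso; eapply CG_disj_PG; eauto.
Qed.

Lemma CG_b_PG J : CG J -> PG (gimg b J).
Proof.
  destruct J as [p q]. intros [G [[Bp Biq]|[Bip Bq]]]; simpl in *;
    (split; [apply isGap_X_b, G|]); simpl.
  - right. split; [right; apply B_b, Bp | apply Bi_b, Biq].
  - left. split; [apply Bi_b, Bip | right; apply B_b, Bq].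
Qed.

Lemma isGap_X_cases p q : isGap X p q -> PG (p, q) \/ CG (p, q).
Proof.
  intros G. pose proof (markov_gap_ends p q G) as (N1 & N2 & N3).
  pose proof G as (Xp & Xq & _).
  unfold PrincipalGap, ComplementaryGap; simpl.
  destruct Xp as [Hp|[Hp|Hp]]; destruct Xq as [Hq|[Hq|Hq]]; tauto.
Qed.

Definition in_gap (J : S1 * S1) (x : S1) : Prop := oarc (fst J) (snd J) x.

Lemma PG_in_gap_not J x : PG J -> in_gap J x -> ~ A x /\ ~ BBs x.
Proof.
  intros HJ Hx. pose proof HJ as [(_ & _ & _ & G) _]. split.
  - intros H. apply (G x Hx). left; exact H.
  - intros [H|[H|(J' & HJ' & Hx')]].
    + apply (G x Hx). right; left; exact H.
    + apply (G x Hx). right; right; exact H.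
    + destruct (isGap_unique _ _ _ _ _ _ (proj1 HJ) (proj1 HJ') Hx Hx') as [E1 E2].
      destruct J as [p q], J' as [p' q']; simpl in *; subst.
      eapply CG_disj_PG; eauto.
Qed.

Lemma CG_in_gap_BB J x : CG J -> in_gap J x -> BBs x.
Proof. intros H1 H2. right; right. exists J; auto. Qed.

Lemma in_gap_letter_map l J x : in_gap J x -> in_gap (gimg (lf l) J) (lf l x).
Proof. apply (oarc_evalw a b markov_a_invol markov_b_cube markov_a_homeo markov_b_homeo [l]). Qed.

Lemma in_gap_evalw u J x : in_gap J x -> in_gap (gimg (evalw u) J) (evalw u x).
Proof. apply oarc_evalw; auto. Qed.

(** * The walk through the principal gaps *)

Variable I1 : S1 * S1.
Hypothesis HI1 : PG I1.

(* The enumeration I_1, I_1', I_2, I_2', ... of the principal gaps, indexed from 0: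
   even steps apply [b_i] and odd steps apply [a]. *)
Definition step_letter (t : nat) (J : S1 * S1) : letter :=
  if Nat.even t then bsel_letter J else LA.

Fixpoint walk_gap (t : nat) : S1 * S1 :=
  match t with
  | O => I1
  | S t' => gimg (lf (step_letter t' (walk_gap t'))) (walk_gap t')
  end.

(* [fwd t] moves the [t]-th gap to the next one; for [t > 0], [bwd t] moves it
   back to the previous one. *)
Definition fwd (t : nat) : letter := step_letter t (walk_gap t).
Definition bwd (t : nat) : letter := if Nat.even t then LA else bsel_letter (walk_gap t).

Lemma walk_gap_S t : walk_gap (S t) = gimg (lf (fwd t)) (walk_gap t).
Proof. reflexivity. Qed.

Lemma walk_gap_PG t : PG (walk_gap t).
Proof.
  induction t as [|t IH]; [exact HI1|]. rewrite walk_gap_S. unfold fwd, step_letter.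
  destruct (Nat.even t); [apply (bsel_letter_spec _ IH) | apply markov_PG_a, IH].
Qed.

Lemma bwd_S t : bwd (S t) = letter_inv (fwd t).
Proof.
  unfold bwd, fwd, step_letter. rewrite Nat.even_succ, <- Nat.negb_even, walk_gap_S.
  destruct (Nat.even t) eqn:E; [|reflexivity].
  unfold fwd, step_letter. rewrite E. apply bsel_letter_back, walk_gap_PG.
Qed.

Lemma walk_gap_back t : gimg (lf (bwd (S t))) (walk_gap (S t)) = walk_gap t.
Proof. rewrite bwd_S, walk_gap_S. apply gimg_letter_inv. Qed.

Lemma fwd_bwd_map t x : lf (fwd t) (lf (bwd (S t)) x) = x.
Proof. rewrite bwd_S. apply letter_map_inv_r; auto. Qed.

Lemma compat_bwd_fwd t : compat (bwd (S t)) (fwd t) = false.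
Proof. rewrite bwd_S; destruct (fwd t); reflexivity. Qed.

Lemma compat_fwd_bwd t : compat (fwd t) (bwd (S t)) = false.
Proof. rewrite bwd_S; destruct (fwd t); reflexivity. Qed.

Lemma letter_eq_dec (l l' : letter) : {l = l'} + {l <> l'}.
Proof. decide equality. Qed.

Lemma letter_cases t l : l = fwd t \/ l = bwd t \/ (l <> LA /\ CG (gimg (lf l) (walk_gap t))).
Proof.
  destruct (bsel_letter_spec _ (walk_gap_PG t)) as [_ C]. unfold fwd, step_letter, bwd.
  destruct (letter_eq_dec l LA) as [->|N1]; [destruct (Nat.even t); auto|].
  destruct (letter_eq_dec l (bsel_letter (walk_gap t))) as [->|N2]; [destruct (Nat.even t); auto|].
  auto.
Qed.

Fixpoint fwd_word (s m : nat) : list letter :=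
  match m with O => [] | S m' => fwd (s + m') :: fwd_word s m' end.

Lemma fwd_word_add s m n x :
  evalw (fwd_word s (m + n)) x = evalw (fwd_word (s + m) n) (evalw (fwd_word s m) x).
Proof.
  induction n as [|n IH]; [rewrite Nat.add_0_r; reflexivity|].
  rewrite Nat.add_succ_r. simpl fwd_word. rewrite !evalw_cons, IH, Nat.add_assoc. reflexivity.
Qed.

Lemma fwd_word_gimg s m : gimg (evalw (fwd_word s m)) (walk_gap s) = walk_gap (s + m).
Proof.
  induction m as [|m IH]; [rewrite Nat.add_0_r; destruct (walk_gap s); reflexivity|].
  rewrite Nat.add_succ_r, walk_gap_S, <- IH. unfold gimg; simpl fwd_word. rewrite !evalw_cons.
  reflexivity.
Qed.

(* Ping-pong: a reduced word moves a point of the [s]-th gap either along the walk,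
   forwards or (at most [s] steps) backwards, or into [a] or [[b]]. *)
Inductive word_fate (s : nat) (x : S1) (w : list letter) : Prop :=
  | Fate_nil : w = [] -> word_fate s x w
  | Fate_fwd m w' : w = fwd (s + m) :: w' -> length w = S m ->
      evalw w x = evalw (fwd_word s (S m)) x -> in_gap (walk_gap (s + S m)) (evalw w x) ->
      word_fate s x w
  | Fate_bwd t w' : w = bwd (S t) :: w' -> (t + length w = s)%nat ->
      evalw (fwd_word t (length w)) (evalw w x) = x -> in_gap (walk_gap t) (evalw w x) ->
      word_fate s x w
  | Fate_BB l w' : w = l :: w' -> l <> LA -> BBs (evalw w x) -> word_fate s x w
  | Fate_A w' : w = LA :: w' -> A (evalw w x) -> word_fate s x w.

Lemma reduced_compat l l' w : reduced (l :: l' :: w) = true -> compat l l' = true.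
Proof. simpl. intros H. apply andb_prop in H. apply H. Qed.

Section WordFate.
Variables (s : nat) (x : S1).
Hypothesis Hx : in_gap (walk_gap s) x.

Lemma word_fate_single l : (1 <= s)%nat -> word_fate s x [l].
Proof.
  intros Hs. destruct (letter_cases s l) as [->|[->|[N C]]].
  - apply (Fate_fwd s x _ 0 []); [rewrite Nat.add_0_r; reflexivity | reflexivity | |].
    { simpl. rewrite Nat.add_0_r. reflexivity. }
    rewrite Nat.add_1_r, walk_gap_S. apply in_gap_letter_map, Hx.
  - destruct s as [|t]; [lia|].
    apply (Fate_bwd (S t) x _ t []); simpl; [reflexivity|lia| |].
    + rewrite Nat.add_0_r. apply fwd_bwd_map.
    + rewrite <- walk_gap_back. apply in_gap_letter_map, Hx.
  - apply (Fate_BB s x _ l []); auto. apply (CG_in_gap_BB _ _ C), in_gap_letter_map, Hx.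
Qed.

Lemma word_fate_cons_fwd l m w : reduced (l :: fwd (s + m) :: w) = true ->
  length (fwd (s + m) :: w) = S m ->
  evalw (fwd (s + m) :: w) x = evalw (fwd_word s (S m)) x ->
  in_gap (walk_gap (s + S m)) (evalw (fwd (s + m) :: w) x) ->
  word_fate s x (l :: fwd (s + m) :: w).
Proof.
  intros Hr Hlen Hev Ho. apply reduced_compat in Hr.
  destruct (letter_cases (s + S m) l) as [->|[->|[N C]]].
  - apply (Fate_fwd s x _ (S m) (fwd (s + m) :: w)); [reflexivity| simpl in *; lia | |].
    + rewrite evalw_cons, Hev. reflexivity.
    + rewrite evalw_cons, Nat.add_succ_r, walk_gap_S. apply in_gap_letter_map, Ho.
  - rewrite Nat.add_succ_r, compat_bwd_fwd in Hr. discriminate.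
  - apply (Fate_BB s x _ l (fwd (s + m) :: w)); auto.
    rewrite evalw_cons. apply (CG_in_gap_BB _ _ C), in_gap_letter_map, Ho.
Qed.

Lemma word_fate_cons_bwd l t w : reduced (l :: bwd (S t) :: w) = true ->
  (S (length (bwd (S t) :: w)) <= s)%nat -> (t + length (bwd (S t) :: w) = s)%nat ->
  evalw (fwd_word t (length (bwd (S t) :: w))) (evalw (bwd (S t) :: w) x) = x ->
  in_gap (walk_gap t) (evalw (bwd (S t) :: w) x) ->
  word_fate s x (l :: bwd (S t) :: w).
Proof.
  intros Hr Hs Ht Hev Ho. apply reduced_compat in Hr.
  set (w1 := bwd (S t) :: w) in *.
  destruct (letter_cases t l) as [->|[->|[N C]]].
  - rewrite compat_fwd_bwd in Hr. discriminate.
  - destruct t as [|t]; [simpl in *; lia|].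
    apply (Fate_bwd s x _ t w1); [reflexivity| simpl in *; lia | |].
    + change (length (bwd (S t) :: w1)) with (1 + length w1)%nat.
      rewrite fwd_word_add, evalw_cons. simpl fwd_word at 2. rewrite evalw_cons, Nat.add_0_r.
      simpl evalw at 2. rewrite fwd_bwd_map, Nat.add_1_r. exact Hev.
    + rewrite evalw_cons, <- walk_gap_back. apply in_gap_letter_map, Ho.
  - apply (Fate_BB s x _ l w1); auto.
    rewrite evalw_cons. apply (CG_in_gap_BB _ _ C), in_gap_letter_map, Ho.
Qed.

Lemma word_fate_cons l w : reduced (l :: w) = true -> (length (l :: w) <= s)%nat ->
  word_fate s x w -> word_fate s x (l :: w).
Proof.
  intros Hr Hl [E|m w' E Hlen Hev Ho|t w' E Hlen Hev Ho|l0 w' E N HB|w' E HA]; subst w.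
  - apply word_fate_single. simpl in Hl; lia.
  - apply word_fate_cons_fwd; assumption.
  - apply word_fate_cons_bwd; assumption.
  - apply reduced_compat in Hr.
    assert (l = LA) as -> by (destruct l, l0; simpl in Hr; congruence).
    apply (Fate_A s x _ (l0 :: w')); [reflexivity|]. rewrite evalw_cons. apply BB_a, HB.
  - apply reduced_compat in Hr.
    apply (Fate_BB s x _ l (LA :: w')); [reflexivity | destruct l; simpl in Hr; congruence|].
    rewrite evalw_cons. destruct l; simpl in Hr; try discriminate; unfold letter_map; simpl.
    + left; apply A_b, HA.
    + right; left; apply B_b, A_b, HA.
Qed.

Lemma word_fate_reduced w : reduced w = true -> (length w <= s)%nat -> word_fate s x w.
Proof.
  induction w as [|l w IH]; intros Hr Hl; [apply Fate_nil; reflexivity|].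
  apply word_fate_cons; [exact Hr | exact Hl|].
  apply IH; [exact (reduced_tail _ _ Hr) | simpl in Hl; lia].
Qed.

End WordFate.

Lemma X_gap z : ~ X z -> exists p q, isGap X p q /\ oarc p q z.
Proof.
  apply (ArcCover_gap (k + (k + k))); [pose proof markov_k_pos; lia | apply markov_X_cover].
Qed.

Lemma gapEdge_word J J' :
  clos_refl_sym_trans _ (gapEdge a b A B Bi) J J' -> exists u, gimg (evalw u) J = J'.
Proof.
  induction 1 as [J J' (_ & _ & [E|[E|E]])|J|J J' _ (u & E)|J1 J2 J3 _ (u1 & E1) _ (u2 & E2)];
    subst.
  - exists [LA]; reflexivity.
  - exists [LB]; reflexivity.
  - exists [LB2]; reflexivity.
  - exists []. destruct J; reflexivity.
  - exists (word_inv u). destruct J as [p q]. unfold gimg; simpl. rewrite !evalw_word_inv; auto.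
  - exists (u2 ++ u1). unfold gimg; simpl. rewrite !evalw_app; auto.
Qed.

Lemma word_into_I1 z : ~ X z -> exists u, in_gap I1 (evalw u z).
Proof.
  intros Nz. destruct (X_gap z Nz) as (p & q & G & Hz).
  destruct (isGap_X_cases p q G) as [P|C].
  - destruct (gapEdge_word _ _ (markov_PG_connected _ _ P HI1)) as (u & <-).
    exists u. apply in_gap_evalw, Hz.
  - destruct (gapEdge_word _ _ (markov_PG_connected _ _ (CG_b_PG _ C) HI1)) as (u & <-).
    exists (u ++ [LB]). rewrite evalw_app. apply in_gap_evalw, (in_gap_letter_map LB (p, q)), Hz.
Qed.

(** * Periodicity of the walk *)

Lemma even_double i : Nat.even (2 * i) = true.
Proof. rewrite Nat.even_mul. reflexivity. Qed.

Lemma even_double_S i : Nat.even (S (2 * i)) = false.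
Proof. rewrite Nat.even_succ, <- Nat.negb_even, even_double. reflexivity. Qed.

Lemma gimg_ext f g J : (forall x, f x = g x) -> gimg f J = gimg g J.
Proof. intros E; unfold gimg; rewrite !E; reflexivity. Qed.

Lemma chainF_fwd_word n i x :
  chainF a b A B Bi n (walk_gap (2 * i)) x = evalw (fwd_word (2 * i) (2 * n)) x.
Proof.
  revert i x; induction n as [|n IH]; intros i x; [reflexivity|]. cbn [chainF].
  assert (E1 : gimg (bsel b A B Bi (walk_gap (2 * i))) (walk_gap (2 * i)) = walk_gap (S (2 * i))).
  { rewrite walk_gap_S. apply gimg_ext. intros y.
    rewrite bsel_letter_map. unfold fwd, step_letter. rewrite even_double. reflexivity. }
  assert (E2 : gimg a (walk_gap (S (2 * i))) = walk_gap (2 * S i)).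
  { replace (2 * S i)%nat with (S (S (2 * i))) by lia. rewrite (walk_gap_S (S (2 * i))).
    unfold fwd, step_letter. rewrite even_double_S. reflexivity. }
  rewrite E1, E2, IH. replace (2 * S n)%nat with (2 + 2 * n)%nat by lia.
  rewrite fwd_word_add. replace (2 * i + 2)%nat with (2 * S i)%nat by lia. f_equal.
  change (fwd_word (2 * i) 2) with [fwd (2 * i + 1); fwd (2 * i + 0)].
  rewrite !evalw_cons, bsel_letter_map, Nat.add_0_r, Nat.add_1_r.
  unfold fwd, step_letter. rewrite even_double, even_double_S. reflexivity.
Qed.

Definition f1 (x : S1) : S1 := evalw (fwd_word 0 (2 * k)) x.

Lemma chainF_f1 x : chainF a b A B Bi k I1 x = f1 x.
Proof. apply (chainF_fwd_word k 0). Qed.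

Lemma walk_gap_eq_I1 t y : in_gap (walk_gap t) y -> in_gap I1 y -> walk_gap t = I1.
Proof.
  intros H1 H2.
  destruct (isGap_unique _ _ _ _ _ _ (proj1 (walk_gap_PG t)) (proj1 HI1) H1 H2) as [E1 E2].
  destruct (walk_gap t), I1; simpl in *; subst; reflexivity.
Qed.

Hypothesis Hstar : StarProp a b A B Bi k I1.

(* [f_1] fixes the endpoint of [I1] in [a], to which its iterates converge;
   the gap [f_1(I1)] shares that endpoint with [I1], hence equals it. *)
Lemma walk_gap_2k : walk_gap (2 * k) = I1.
Proof.
  destruct Hstar as [_ Hconv]. pose proof HI1 as [(_ & _ & (z & Hz) & _) _].
  assert (Hfix : forall e, A e -> (e = fst I1 \/ e = snd I1) -> f1 e = e).
  { intros e He Hor. apply (Cont_limit_fixed f1 e z); [apply evalw_cont; auto|].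
    intros eps Heps. destruct (Hconv e He Hor z Hz eps Heps) as (N & HN). exists N.
    intros n Hn. erewrite <- Nat.iter_swap_gen with (f := fun y => y);
      [apply HN, Hn | intros; apply chainF_f1]. }
  pose proof (fwd_word_gimg 0 (2 * k)) as Eg. rewrite Nat.add_0_l in Eg.
  pose proof (proj1 (walk_gap_PG (2 * k))) as G2. rewrite <- Eg in G2 |- *.
  change (walk_gap 0) with I1 in *. unfold gimg in *. cbn [fst snd] in G2.
  fold (f1 (fst I1)) (f1 (snd I1)) in *.
  destruct (PG_A_end _ HI1) as [H|H].
  - rewrite (Hfix _ H (or_introl eq_refl)) in *.
    rewrite <- (isGap_snd_unique _ _ _ _ (proj1 HI1) G2). symmetry; apply surjective_pairing.
  - rewrite (Hfix _ H (or_intror eq_refl)) in *.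
    rewrite <- (isGap_fst_unique _ _ _ _ (proj1 HI1) G2). symmetry; apply surjective_pairing.
Qed.

Definition is_walk_period (L : nat) : Prop :=
  (0 < L)%nat /\ walk_gap L = I1 /\ forall j, (0 < j < L)%nat -> walk_gap j <> I1.

Lemma walk_period_exists : exists L, is_walk_period L.
Proof.
  pose proof markov_k_pos.
  destruct (nat_least (fun t => (0 < t)%nat /\ walk_gap t = I1) (2 * k))
    as (L & (H1 & H2) & H3); [split; [lia | apply walk_gap_2k]|].
  exists L; repeat split; auto. intros j Hj E. apply (H3 j); [lia | split; [lia | exact E]].
Qed.

(* For equal gaps at indices of opposite parity, [fwd] at one index is [bwd] at
   the other, so the two walks run against each other. *)
Lemma walk_gap_reflect s t : walk_gap s = walk_gap t -> Nat.even (s + t) = false ->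
  forall i, (i <= t)%nat -> walk_gap (s + i) = walk_gap (t - i).
Proof.
  intros E Hp i. induction i as [|i IH]; intros Hi; [rewrite Nat.add_0_r, Nat.sub_0_r; exact E|].
  rewrite Nat.add_succ_r, walk_gap_S.
  replace (t - i)%nat with (S (t - S i)) in IH by lia.
  rewrite <- (walk_gap_back (t - S i)), <- IH by lia.
  f_equal. f_equal. unfold fwd, step_letter, bwd. rewrite IH by lia.
  replace (S (t - S i)) with (t - i)%nat by lia.
  assert (Hq : Nat.even ((s + i) + (t - i)) = false)
    by (replace ((s + i) + (t - i))%nat with (s + t)%nat by lia; exact Hp).
  rewrite Nat.even_add in Hq.
  destruct (Nat.even (s + i)), (Nat.even (t - i)); simpl in Hq; congruence.
Qed.

Section Period.
Variable L : nat.
Hypothesis HL : is_walk_period L.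

(* An odd period would make the walk turn back halfway, so that a letter fixes a
   principal gap. *)
Lemma period_even : Nat.even L = true.
Proof.
  destruct HL as (HL0 & HLJ & _).
  destruct (Nat.even L) eqn:E; [reflexivity|exfalso].
  assert (Ho : Nat.odd L = true) by (rewrite <- Nat.negb_even, E; reflexivity).
  apply Nat.odd_spec in Ho as (j & Hj).
  pose proof (walk_gap_reflect 0 L (eq_sym HLJ) E j ltac:(lia)) as R.
  simpl in R. replace (L - j)%nat with (S j) in R by lia.
  rewrite walk_gap_S in R. exact (gimg_letter_neq (fwd j) _ (walk_gap_PG j) (eq_sym R)).
Qed.

Lemma even_add_period t : Nat.even (t + L) = Nat.even t.
Proof. rewrite Nat.even_add, period_even. destruct (Nat.even t); reflexivity. Qed.

Lemma walk_gap_periodic t : walk_gap (t + L) = walk_gap t.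
Proof.
  induction t as [|t IH]; [apply HL|].
  simpl plus. rewrite !walk_gap_S. unfold fwd, step_letter.
  rewrite IH, even_add_period. reflexivity.
Qed.

Lemma fwd_periodic t : fwd (t + L) = fwd t.
Proof.
  unfold fwd, step_letter. rewrite walk_gap_periodic, even_add_period. reflexivity.
Qed.

Lemma fwd_word_periodic s m : fwd_word (s + L) m = fwd_word s m.
Proof.
  induction m as [|m IH]; [reflexivity|]. simpl fwd_word. rewrite IH.
  replace (s + L + m)%nat with ((s + m) + L)%nat by lia. rewrite fwd_periodic. reflexivity.
Qed.

Lemma fwd_word_mult c m : fwd_word (c * L) m = fwd_word 0 m.
Proof.
  induction c as [|c IH]; [reflexivity|]. rewrite Nat.mul_succ_l, fwd_word_periodic. exact IH.
Qed.

Lemma walk_gap_mult c : walk_gap (c * L) = I1.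
Proof.
  induction c as [|c IH]; [reflexivity|]. rewrite Nat.mul_succ_l, walk_gap_periodic. exact IH.
Qed.

Lemma walk_gap_I1_mult t : walk_gap t = I1 -> exists c, t = (c * L)%nat.
Proof.
  destruct HL as (HL0 & _ & HLmin).
  induction t as [t IH] using (well_founded_induction lt_wf). intros Ht.
  destruct (Nat.lt_ge_cases t L) as [Hl|Hl].
  - destruct t as [|t]; [exists 0%nat; reflexivity|]. exfalso; apply (HLmin (S t)); [lia|exact Ht].
  - destruct (IH (t - L)%nat ltac:(lia)) as (c & Hc).
    + rewrite <- (walk_gap_periodic (t - L)). replace (t - L + L)%nat with t by lia. exact Ht.
    + exists (S c). lia.
Qed.

Definition ret (x : S1) : S1 := evalw (fwd_word 0 L) x.

Lemma ret_iter c x : evalw (fwd_word 0 (c * L)) x = Nat.iter c ret x.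
Proof.
  induction c as [|c IH]; [reflexivity|].
  rewrite Nat.mul_succ_l, fwd_word_add, Nat.add_0_l, fwd_word_mult, IH. reflexivity.
Qed.

Lemma f1_iter : exists c0, (0 < c0)%nat /\ forall x, f1 x = Nat.iter c0 ret x.
Proof.
  pose proof markov_k_pos.
  destruct (walk_gap_I1_mult _ walk_gap_2k) as (c0 & Hc0). exists c0. split.
  - destruct c0; lia.
  - intros x. unfold f1. rewrite Hc0. apply ret_iter.
Qed.

Lemma ret_gimg : gimg ret I1 = I1.
Proof.
  pose proof (fwd_word_gimg 0 L) as E. rewrite Nat.add_0_l, (proj1 (proj2 HL)) in E. exact E.
Qed.

Lemma iter_ret_fst c : Nat.iter c ret (fst I1) = fst I1.
Proof.
  induction c as [|c IH]; [reflexivity|]. simpl. rewrite IH.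
  exact (f_equal fst ret_gimg).
Qed.

Lemma iter_ret_in_I1 c x : in_gap I1 x -> in_gap I1 (Nat.iter c ret x).
Proof.
  apply Nat.iter_invariant. intros y Hy. rewrite <- ret_gimg. apply in_gap_evalw, Hy.
Qed.

Lemma iter_ret_mono c x y : ccw (fst I1) x y -> ccw (fst I1) (Nat.iter c ret x) (Nat.iter c ret y).
Proof.
  intros H. rewrite <- (iter_ret_fst c) at 1.
  induction c as [|c IH]; [exact H|]. simpl. apply evalw_ccw; auto.
Qed.

Lemma in_I1_ccw x : in_gap I1 x <-> ccw (fst I1) x (snd I1).
Proof.
  unfold in_gap, oarc. pose proof (PG_ends_neq _ HI1).
  split; [intros [H'|[E _]]; [exact H'|contradiction] | intros; left; auto].
Qed.

Lemma in_I1_total x y : in_gap I1 x -> in_gap I1 y -> x <> y ->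
  ccw (fst I1) x y \/ ccw (fst I1) y x.
Proof.
  intros Hx Hy N. apply in_I1_ccw in Hx, Hy.
  destruct (ccw_neq _ _ _ Hx) as (Nx & _), (ccw_neq _ _ _ Hy) as (Ny & _).
  destruct (ccw_total (fst I1) x y) as [C|C]; auto.
  right; apply ccw_cycle, ccw_cycle, C.
Qed.

Lemma ret_nofix x : in_gap I1 x -> ret x <> x.
Proof.
  intros Hx E. destruct Hstar as [H1 _]. destruct f1_iter as (c0 & _ & Hc).
  apply (H1 x Hx). rewrite chainF_f1, Hc. clear Hc H1.
  induction c0 as [|c IH]; [reflexivity|]. simpl. rewrite IH. exact E.
Qed.

Lemma iter_ret_nofix c x : (0 < c)%nat -> in_gap I1 x -> Nat.iter c ret x <> x.
Proof.
  intros Hc Hx E. destruct c as [|c]; [lia|].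
  destruct (in_I1_total x (ret x) Hx (iter_ret_in_I1 1 x Hx) (not_eq_sym (ret_nofix x Hx)))
    as [C|C].
  - pose proof (iter_strict_incr (ccw (fst I1)) ret x (ccw_from_trans (fst I1)) iter_ret_mono C c).
    rewrite E in H. exact (ccw_from_asym _ _ _ H H).
  - pose proof (iter_strict_incr (fun u v => ccw (fst I1) v u) ret x
      (fun u v w H1 H2 => ccw_from_trans _ _ _ _ H2 H1) (fun n u v => iter_ret_mono n v u) C c).
    cbv beta in H. rewrite E in H. exact (ccw_from_asym _ _ _ H H).
Qed.

(* A reduced word taking a point of [I1] back into [I1] is a power of [ret]:
   by the ping-pong lemma, it walks a whole number of periods along the walk. *)
Lemma word_return_I1 x0 w : in_gap I1 x0 -> reduced w = true -> in_gap I1 (evalw w x0) ->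
  w = [] \/ exists i j, i <> j /\ Nat.iter i ret (evalw w x0) = Nat.iter j ret x0.
Proof.
  intros Hx0 Hr Hy. set (n := length w). set (s := (n * L)%nat).
  assert (Hs : in_gap (walk_gap s) x0) by (unfold s; rewrite walk_gap_mult; exact Hx0).
  assert (Hl : (length w <= s)%nat) by (destruct HL as (HL0 & _); unfold s, n; nia).
  destruct (word_fate_reduced s x0 Hs w Hr Hl)
    as [E|m w' E Hlen Hev Ho|t w' E Hlen Hev Ho|l w' E N HB|w' E HA].
  - left; exact E.
  - right. destruct (walk_gap_I1_mult _ (walk_gap_eq_I1 _ _ Ho Hy)) as (d & Hd).
    assert (Hm : S m = ((d - n) * L)%nat) by (rewrite Nat.mul_sub_distr_r; unfold s in Hd; lia).
    exists 0%nat, (d - n)%nat. split; [destruct (d - n)%nat; simpl in Hm; lia|].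
    simpl. rewrite Hev. unfold s. rewrite fwd_word_mult, Hm. apply ret_iter.
  - right. destruct (walk_gap_I1_mult _ (walk_gap_eq_I1 _ _ Ho Hy)) as (d & ->).
    assert (Hm : length w = ((n - d) * L)%nat)
      by (rewrite Nat.mul_sub_distr_r; unfold s in Hlen; lia).
    assert (0 < n)%nat by (unfold n; rewrite E; simpl; lia).
    exists (n - d)%nat, 0%nat. split; [destruct (n - d)%nat; simpl in Hm; lia|].
    rewrite <- ret_iter, <- Hm, <- (fwd_word_mult d). exact Hev.
  - exfalso. apply (proj2 (PG_in_gap_not I1 _ HI1 Hy)), HB.
  - exfalso. apply (proj1 (PG_in_gap_not I1 _ HI1 Hy)), HA.
Qed.

Lemma iter_ret_inj i j x : in_gap I1 x -> Nat.iter i ret x = Nat.iter j ret x -> i = j.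
Proof.
  intros Hx E. destruct (Nat.lt_trichotomy i j) as [H|[H|H]]; [exfalso | exact H | exfalso].
  - apply (iter_ret_nofix (j - i) (Nat.iter i ret x)); [lia | apply iter_ret_in_I1, Hx|].
    rewrite <- Nat.iter_add, Nat.sub_add by lia. symmetry; exact E.
  - apply (iter_ret_nofix (i - j) (Nat.iter j ret x)); [lia | apply iter_ret_in_I1, Hx|].
    rewrite <- Nat.iter_add, Nat.sub_add by lia. exact E.
Qed.

Lemma stabilizer_trivial x0 (g : G) : in_gap I1 x0 -> phi a b g x0 = x0 -> g = gid.
Proof.
  destruct g as [w Hr]. unfold phi; simpl. intros Hx0 E. apply G_eq; simpl.
  assert (Hy : in_gap I1 (evalw w x0)) by (rewrite E; exact Hx0).
  destruct (word_return_I1 x0 w Hx0 Hr Hy) as [H|(i & j & Nij & H)]; [exact H|].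
  rewrite E in H. exfalso; exact (Nij (iter_ret_inj i j x0 Hx0 H)).
Qed.

Lemma orbit_in_I1 x0 y : in_gap I1 x0 -> orbit a b x0 y -> in_gap I1 y ->
  exists i j, Nat.iter i ret y = Nat.iter j ret x0.
Proof.
  intros Hx0 [[w Hr] <-] Hy. unfold phi in *; simpl in *.
  destruct (word_return_I1 x0 w Hx0 Hr Hy) as [->|(i & j & _ & H)];
    [exists 0%nat, 0%nat | exists i, j]; auto.
Qed.

Lemma iter_f1 c0 n x : (forall y, f1 y = Nat.iter c0 ret y) ->
  Nat.iter n (chainF a b A B Bi k I1) x = Nat.iter (n * c0) ret x.
Proof.
  intros Hc. induction n as [|n IH]; [reflexivity|].
  rewrite Nat.iter_succ, IH, chainF_f1, Hc, <- Nat.iter_add. reflexivity.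
Qed.

(* By ( * ), the [ret]-orbit of every point of [I1] converges to the endpoint of
   [I1] lying in [a]. *)
Lemma ret_orbit_to_snd : A (snd I1) -> forall z w, in_gap I1 z -> in_gap I1 w ->
  exists N, ccw (fst I1) z (Nat.iter N ret w).
Proof.
  intros He z w Hz Hw. destruct Hstar as [_ Hconv]. destruct f1_iter as (c0 & _ & Hc0).
  apply in_I1_ccw in Hz. destruct (ccw_near_snd _ _ _ Hz) as (eps & Heps & Hf).
  destruct (Hconv _ He (or_intror eq_refl) w Hw eps Heps) as (N & HN).
  specialize (HN N (le_n N)). rewrite (iter_f1 c0 N w Hc0) in HN.
  exists (N * c0)%nat.
  assert (HwN : ccw (fst I1) (Nat.iter (N * c0) ret w) (snd I1))
    by apply in_I1_ccw, iter_ret_in_I1, Hw.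
  apply (ccw_from_outer _ _ _ _ Hz HwN), Hf; assumption.
Qed.

Lemma ret_orbit_to_fst : A (fst I1) -> forall z w, in_gap I1 z -> in_gap I1 w ->
  exists N, ccw (fst I1) (Nat.iter N ret w) z.
Proof.
  intros He z w Hz Hw. destruct Hstar as [_ Hconv]. destruct f1_iter as (c0 & _ & Hc0).
  apply in_I1_ccw in Hz. destruct (ccw_near_fst _ _ _ Hz) as (eps & Heps & Hf).
  destruct (Hconv _ He (or_introl eq_refl) w Hw eps Heps) as (N & HN).
  specialize (HN N (le_n N)). rewrite (iter_f1 c0 N w Hc0) in HN.
  exists (N * c0)%nat. apply Hf; [apply in_I1_ccw, iter_ret_in_I1, Hw | exact HN].
Qed.

Section OrbitInI1.
Variable x0 : S1.
Hypothesis Hx0 : in_gap I1 x0.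

Local Notation Orb := (orbit a b x0).

Lemma ret_orbit_onto y : in_gap I1 y -> Orb y -> exists y', in_gap I1 y' /\ Orb y' /\ ret y' = y.
Proof.
  intros Hy Oy. exists (evalw (word_inv (fwd_word 0 L)) y). repeat split.
  - assert (E : gimg (evalw (word_inv (fwd_word 0 L))) I1 = I1).
    { rewrite <- ret_gimg at 1. unfold gimg, ret; simpl. rewrite !evalw_word_inv by auto.
      symmetry; apply surjective_pairing. }
    rewrite <- E. apply in_gap_evalw, Hy.
  - apply orbit_evalw; auto.
  - unfold ret. apply evalw_word_inv_r; auto.
Qed.

(* The orbit of [x0] meets [I1] in the [ret]-orbit of [x0], ordered along [I1]
   in one direction or the other. *)
Lemma orbit_neighbours_I1 (lt : S1 -> S1 -> Prop) :
  (forall x y, lt x y <-> ccw (fst I1) x y) \/ (forall x y, lt x y <-> ccw (fst I1) y x) ->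
  (forall z w, in_gap I1 z -> in_gap I1 w -> exists N, lt z (Nat.iter N ret w)) ->
  forall z, in_gap I1 z -> ~ Orb z -> orbit_neighbours (in_gap I1) Orb lt ret z.
Proof.
  intros Hlt Hconv z Hz Nz.
  assert (Hmono : forall x y, lt x y -> lt (ret x) (ret y))
    by (destruct Hlt as [E|E]; intros x y; rewrite !E; apply (iter_ret_mono 1)).
  apply (orbit_neighbours_out (in_gap I1) Orb lt ret x0); auto.
  - destruct Hlt as [E|E]; intros x y w; rewrite !E; eauto using ccw_from_trans.
  - destruct Hlt as [E|E]; intros x y; rewrite !E; apply ccw_from_asym.
  - intros x y Hx Hy N. destruct (in_I1_total x y Hx Hy N); destruct Hlt as [E|E]; rewrite !E; auto.
  - apply (iter_ret_in_I1 1).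
  - apply ret_orbit_onto.
  - apply orbit_refl.
  - intros y Hy; apply orbit_evalw; auto.
  - apply ret_nofix.
  - intros w Hw Ow. apply orbit_in_I1; auto.
Qed.

Lemma orbit_free_arc_I1 u v z : in_gap I1 u -> in_gap I1 v ->
  ccw (fst I1) u z -> ccw (fst I1) z v ->
  (forall o, in_gap I1 o -> Orb o -> ccw (fst I1) u o -> ccw (fst I1) o v -> False) ->
  oarc u v z /\ forall o, oarc u v o -> ~ Orb o.
Proof.
  intros Hu Hv H1 H2 Hno. apply in_I1_ccw in Hu, Hv. split.
  - left. exact (ccw_from_inner _ _ _ _ H1 H2).
  - intros o Ho Oo. pose proof (ccw_from_trans _ _ _ _ H1 H2) as Huv.
    destruct (oarc_from _ _ _ _ _ Hu Hv Huv Ho) as (B1 & B2 & B3).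
    apply (Hno o); auto. apply in_I1_ccw, B1.
Qed.

Lemma orbit_gap_I1 z : in_gap I1 z -> ~ Orb z ->
  exists u v, Orb u /\ Orb v /\ oarc u v z /\ forall o, oarc u v o -> ~ Orb o.
Proof.
  intros Hz Nz. destruct (PG_A_end _ HI1) as [He|He].
  - destruct (orbit_neighbours_I1 (fun x y => ccw (fst I1) y x)) with (z := z)
      as (u & Ou & Du & H1 & H2 & H3); auto.
    { right; tauto. }
    { intros; apply ret_orbit_to_fst; auto. }
    exists (ret u), u. split; [apply orbit_evalw; auto|]. split; [exact Ou|].
    apply orbit_free_arc_I1; auto; [apply (iter_ret_in_I1 1), Du|].
    intros o Do Oo Ho1 Ho2. exact (H3 o Do Oo Ho2 Ho1).
  - destruct (orbit_neighbours_I1 (fun x y => ccw (fst I1) x y)) with (z := z)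
      as (u & Ou & Du & H1 & H2 & H3); auto.
    { left; tauto. }
    { apply ret_orbit_to_snd; auto. }
    exists u, (ret u). split; [exact Ou|]. split; [apply orbit_evalw; auto|].
    apply orbit_free_arc_I1; auto. apply (iter_ret_in_I1 1), Du.
Qed.

Hypothesis HSS : StarStarProp a b A B Bi.

(* By ( ** ) every gap of the orbit closure contains a point that some element of
   G moves off X, and hence into [I1]. *)
Lemma orbit_gap_to_I1 p q : isGap (closure Orb) p q ->
  exists u y, oarc p q y /\ in_gap I1 (evalw u y).
Proof.
  intros (_ & _ & (x & Hx) & _). destruct (oarc_open _ _ _ Hx) as (eps & Heps & Hball).
  destruct (not_all_ex_not _ _ (HSS x eps Heps)) as (y & Hy).
  apply imply_to_and in Hy as (Hdy & Hy). apply not_all_ex_not in Hy as (g & Hg).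
  destruct (word_into_I1 _ Hg) as (u & Hu).
  exists (u ++ proj1_sig g), y. split; [apply Hball, Hdy|]. rewrite evalw_app. exact Hu.
Qed.

Lemma orbit_closure_gap_ends p q : isGap (closure Orb) p q -> Orb p /\ Orb q.
Proof.
  intros G. destruct (orbit_gap_to_I1 p q G) as (U & y & Hy & HzI).
  assert (G2 : isGap (closure Orb) (evalw U p) (evalw U q))
    by (apply isGap_evalw; auto; intros; apply closure_orbit_evalw; auto).
  assert (Hz2 : oarc (evalw U p) (evalw U q) (evalw U y)) by (apply oarc_evalw; auto).
  assert (Nz : ~ Orb (evalw U y))
    by (intros Oz; apply (proj2 (proj2 (proj2 G2)) _ Hz2), closure_incl, Oz).
  destruct (orbit_gap_I1 _ HzI Nz) as (u & v & Ou & Ov & Huv & Hno).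
  destruct (isGap_unique _ _ _ _ _ _ G2 (isGap_closure _ _ _ _ Ou Ov Huv Hno) Hz2 Huv) as [E1 E2].
  rewrite <- (evalw_word_inv a b markov_a_invol markov_b_cube U p),
          <- (evalw_word_inv a b markov_a_invol markov_b_cube U q), E1, E2.
  split; apply orbit_evalw; auto.
Qed.

Lemma tight_at_I1 : tight_at a b x0.
Proof. split; [intros g; apply stabilizer_trivial, Hx0 | apply orbit_closure_gap_ends]. Qed.

End OrbitInI1.
End Period.
End Markov.

Theorem lemma11p6 (k : nat) (a b : S1 -> S1) (A B Bi : S1 -> Prop)
  (I1 : S1 * S1) :
  MarkovSystem a b A B Bi k ->
  PrincipalGap A B Bi I1 ->
  StarProp a b A B Bi k I1 ->
  StarStarProp a b A B Bi ->
  exists c : G -> G -> G -> Z,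
    circular_order c /\
    exists x0 : S1, oarc (fst I1) (snd I1) x0 /\ dyn_realization a b c x0.
Proof.
  intros HM HI1 Hstar HSS.
  destruct (walk_period_exists a b A B Bi k HM I1 HI1 Hstar) as (L & HL).
  pose proof HI1 as [(_ & _ & (x0 & Hx0) & _) _].
  assert (Htight : tight_at a b x0) by (eapply tight_at_I1; eassumption).
  exists (orbit_order a b x0). split.
  - apply orbit_order_circular; [eapply markov_a_invol | eapply markov_b_cube
      | eapply markov_a_homeo | eapply markov_b_homeo | apply Htight]; exact HM.
  - exists x0. split; [exact Hx0|]. split; [exact Htight|].
    intros g1 g2 g3. split; [apply orient_eq1 | apply orient_eqN1].
Qed.
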